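(* Fix a real number $c \ge 1$. For positive integers $n$ with $cn$ an integer, put $p=n$ and $q=cn$, and let $B_{p,q}$ be the random variable with $$\mathbb{P}(B_{p,q}=k) = \frac{\binom{q}{k}\binom{p+k}{k}}{\sum_{j=0}^{q}\binom{q}{j}\binom{p+j}{j}}, \qquad k=0,1,\dots,q.$$ Set $$m_{p,q} = \frac{q-p+\sqrt{p^2+6pq+q^2}}{4}, \qquad s_{p,q}^2 = \frac{q-p}{8}+\frac{(p+q)^2}{8\sqrt{p^2+6pq+q^2}}.$$ Then, as $n\to\infty$, $(B_{p,q}-m_{p,q})/s_{p,q}$ converges in distribution to a standard normal random variable. *)

From Stdlib Require Import Reals.
Open Scope R_scope.

Definition bweight (p q k : nat) : R := C q k * C (p + k) k.

Definition bnorm (p q : nat) : R := sum_f_R0 (bweight p q) q.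

Definition bprob (p q k : nat) : R := bweight p q k / bnorm p q.

Definition disc (p q : nat) : R :=
  INR p ^ 2 + 6 * INR p * INR q + INR q ^ 2.

Definition m_pq (p q : nat) : R := (INR q - INR p + sqrt (disc p q)) / 4.

Definition s2_pq (p q : nat) : R :=
  (INR q - INR p) / 8 + (INR p + INR q) ^ 2 / (8 * sqrt (disc p q)).

Definition s_pq (p q : nat) : R := sqrt (s2_pq p q).

Definition norm_cdf (p q : nat) (x : R) : R :=
  sum_f_R0 (fun k =>
    if Rle_dec ((INR k - m_pq p q) / s_pq p q) x then bprob p q k else 0) q.

(* Standard Gaussian density without normalizing constant. *)
Definition gauss (t : R) : R := exp (- (t ^ 2) / 2).

From Coquelicot Require Import Coquelicot.
From Stdlib Require Import Reals Lra Psatz Lia ZArith.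
Open Scope R_scope.

(* The ratio r_k = w_(k+1) / w_k is decreasing in k, and its logarithm is
   -(k+1-m)/s^2 + O(1/q) + O(((k+1-m)/q)^2) where m = m_(p,q) is the root of
   r = 1 (the mode) and s^2 = s2_(p,q) is the curvature there.  Hence
   * in the window  |k - m| <= T s  the weights are, up to one common factor
     e^K and a relative error O(T^3/s), the Gaussian values gauss((k-m)/s);
   * outside the window they decay at least geometrically, so both tails have
     mass O(s e^K gauss T).
   Comparing the window sum with a Riemann sum of gauss and using the Gaussian
   integral (computed by Feynman's trick), the distribution function of
   (B - m)/s is within  (30 + 3|x|) gauss T + 900 (T+3)^3 / s  of Phi(x).
   Choosing T large and then n large gives the theorem. *)

Lemma exp_le x y : x <= y -> exp x <= exp y.
Proof.
  intros H; destruct (Rle_lt_or_eq_dec _ _ H) as [Hlt|Heq].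
  - now apply Rlt_le, exp_increasing.
  - rewrite Heq; lra.
Qed.

Lemma abs_le_inv x c : Rabs x <= c -> -c <= x <= c.
Proof. intros. generalize (Rle_abs x) (Rle_abs (-x)). rewrite Rabs_Ropp. lra. Qed.

Lemma div_le x y u v : 0 < y -> 0 < v -> x * v <= u * y -> x / y <= u / v.
Proof.
  intros. unfold Rdiv. apply Rmult_le_reg_r with (y * v). nra.
  replace (x * / y * (y * v)) with (x * v) by (field; lra).
  replace (u * / v * (y * v)) with (u * y) by (field; lra). auto.
Qed.

Lemma div_le_k x Q k : 0 < Q -> x <= k * Q -> x / Q <= k.
Proof.
  intros. apply Rmult_le_reg_r with Q. auto.
  replace (x / Q * Q) with x by (field; lra). lra.
Qed.

(* With E(x) = int_0^x e^(-t^2) and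
   F(x) = int_0^1 e^(-x^2 (1+t^2)) / (1+t^2) dt, the sum E^2 + F has zero
   derivative, and F(0) = atan 1 = pi/4.  Since 0 <= F(x) <= e^(-x^2), this
   gives E(x) -> sqrt(pi)/2 with an explicit tail bound. *)

Definition egauss (t : R) : R := exp (- (t * t)).
Definition EInt (x : R) : R := RInt egauss 0 x.
Definition feynman (x t : R) : R := exp (- (x * x) * (1 + t * t)) / (1 + t * t).
Definition FInt (x : R) : R := RInt (feynman x) 0 1.

Lemma one_plus_sq_pos t : 0 < 1 + t * t.
Proof. nra. Qed.

Lemma egauss_cont z : continuous egauss z.
Proof.
  apply (@ex_derive_continuous R_AbsRing R_NormedModule).
  unfold egauss; auto_derive; auto.
Qed.

Lemma egauss_ex_RInt a b : ex_RInt egauss a b.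
Proof. apply (@ex_RInt_continuous R_CompleteNormedModule); intros; apply egauss_cont. Qed.

Lemma feynman_cont x t : continuous (feynman x) t.
Proof.
  apply (@ex_derive_continuous R_AbsRing R_NormedModule). unfold feynman.
  auto_derive. generalize (one_plus_sq_pos t). lra.
Qed.

Lemma EInt_deriv x : is_derive EInt x (egauss x).
Proof.
  apply (is_derive_RInt egauss EInt 0 x).
  - apply filter_forall; intros b.
    apply (@RInt_correct R_CompleteNormedModule), egauss_ex_RInt.
  - apply egauss_cont.
Qed.

Lemma feynman_deriv x t :
  is_derive (fun z => feynman z t) x (- 2 * x * exp (- (x * x) * (1 + t * t))).
Proof.
  unfold feynman. generalize (one_plus_sq_pos t); intro.
  auto_derive. lra. field. lra.
Qed.

Lemma FInt_deriv x :
  is_derive FInt x (RInt (fun t => - 2 * x * exp (- (x * x) * (1 + t * t))) 0 1).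
Proof.
  unfold FInt.
  rewrite (RInt_ext _ (fun t => Derive (fun u => feynman u t) x)).
  2:{ intros; symmetry; apply is_derive_unique, feynman_deriv. }
  apply (is_derive_RInt_param feynman 0 1 x).
  - apply filter_forall; intros y t _. eexists; apply feynman_deriv.
  - intros t _.
    apply continuity_2d_pt_ext with (f := fun u v => - 2 * u * exp (- (u * u) * (1 + v * v))).
    { intros; symmetry; apply is_derive_unique, feynman_deriv. }
    apply continuity_2d_pt_mult.
    + apply continuity_2d_pt_mult.
      * apply continuity_2d_pt_const.
      * apply continuity_2d_pt_id1.
    + apply continuity_1d_2d_pt_comp with (f := exp) (g := fun u v => - (u * u) * (1 + v * v)).
      * apply derivable_continuous_pt, derivable_pt_exp.
      * apply continuity_2d_pt_mult.
        -- apply continuity_2d_pt_opp, continuity_2d_pt_mult; apply continuity_2d_pt_id1.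
        -- apply continuity_2d_pt_plus; [apply continuity_2d_pt_const|].
           apply continuity_2d_pt_mult; apply continuity_2d_pt_id2.
  - apply filter_forall; intros y.
    apply (@ex_RInt_continuous R_CompleteNormedModule); intros; apply feynman_cont.
Qed.

(* The parametric derivative equals -2 e^(-x^2) E(x), by the substitution u = x t. *)
Lemma FInt_deriv_val x :
  RInt (fun t => - 2 * x * exp (- (x * x) * (1 + t * t))) 0 1 = - 2 * exp (- (x * x)) * EInt x.
Proof.
  transitivity (RInt (fun t => (- 2 * exp (- (x * x))) * scal x (egauss (x * t + 0))) 0 1).
  { apply RInt_ext; intros t _. unfold egauss, scal; simpl; unfold mult; simpl.
    replace (- (x * x) * (1 + t * t)) with (- (x * x) + - ((x * t + 0) * (x * t + 0))) by ring.
    rewrite exp_plus. ring. }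
  rewrite (RInt_scal (V := R_CompleteNormedModule)).
  2:{ apply (@ex_RInt_continuous R_CompleteNormedModule). intros z _.
      apply (@ex_derive_continuous R_AbsRing R_NormedModule).
      unfold egauss, scal; simpl; unfold mult; simpl. auto_derive; auto. }
  rewrite (RInt_comp_lin (V := R_CompleteNormedModule)) by apply egauss_ex_RInt.
  unfold EInt, scal; simpl; unfold mult; simpl. repeat f_equal; ring.
Qed.

(* F(0) = int_0^1 dt/(1+t^2) = atan 1. *)
Lemma FInt_0 : FInt 0 = PI / 4.
Proof.
  unfold FInt.
  assert (H : is_RInt (feynman 0) 0 1 (minus (atan 1) (atan 0))).
  { apply (is_RInt_derive (V := R_CompleteNormedModule) atan).
    - intros t _. apply is_derive_Reals. unfold feynman.
      replace (exp (- (0 * 0) * (1 + t * t)) / (1 + t * t)) with (/ (1 + t ^ 2)).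
      + apply derivable_pt_lim_atan.
      + replace (- (0 * 0) * (1 + t * t)) with 0 by ring. rewrite exp_0.
        generalize (one_plus_sq_pos t). intro. field. lra.
    - intros t _. apply feynman_cont. }
  rewrite (is_RInt_unique _ _ _ _ H). unfold minus, plus, opp; simpl.
  rewrite atan_1, atan_0. ring.
Qed.

(* E(x)^2 + F(x) is constant, equal to its value pi/4 at 0. *)
Lemma gaussian_identity x : EInt x * EInt x + FInt x = PI / 4.
Proof.
  set (h y := EInt y * EInt y + FInt y).
  assert (Hd : forall y, is_derive h y 0).
  { intros y. unfold h.
    evar (d : R).
    assert (H : is_derive (fun z => EInt z * EInt z + FInt z) y d).
    { apply (@is_derive_plus R_AbsRing R_NormedModule).
      - apply (@is_derive_mult R_AbsRing); try apply EInt_deriv.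
        intros; apply Rmult_comm.
      - apply FInt_deriv. }
    unfold d in H. rewrite FInt_deriv_val in H.
    replace 0 with (plus (plus (mult (egauss y) (EInt y)) (mult (EInt y) (egauss y)))
                         (- 2 * exp (- (y * y)) * EInt y)); [exact H|].
    unfold plus, mult; simpl; unfold egauss; ring. }
  assert (H0 : h 0 = PI / 4).
  { unfold h, EInt. rewrite RInt_point, FInt_0. unfold zero; simpl. ring. }
  fold (h x). rewrite <- H0.
  destruct (Req_dec x 0) as [->|Hx]; [reflexivity|].
  destruct (MVT_abs h (fun _ => 0) 0 x) as [c [Hc _]].
  { intros; apply is_derive_Reals, Hd. }
  rewrite Rabs_R0, Rmult_0_l in Hc. apply Rabs_eq_0 in Hc. lra.
Qed.

(* 0 <= F(x) <= e^(-x^2), as 1/(1+t^2) <= 1 and 1+t^2 >= 1. *)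
Lemma FInt_bounds x : 0 <= FInt x <= exp (- (x * x)).
Proof.
  assert (Hb : forall t, 0 <= feynman x t <= exp (- (x * x))).
  { intros t. unfold feynman. generalize (one_plus_sq_pos t); intro. split.
    - apply Rlt_le, Rdiv_lt_0_compat; [apply exp_pos|lra].
    - apply Rle_trans with (exp (- (x * x) * (1 + t * t))).
      + rewrite <- (Rmult_1_r (exp _)) at 2. apply Rmult_le_compat_l.
        * apply Rlt_le, exp_pos.
        * rewrite <- Rinv_1. apply Rinv_le_contravar; nra.
      + apply exp_le. nra. }
  assert (EX : ex_RInt (feynman x) 0 1).
  { apply (@ex_RInt_continuous R_CompleteNormedModule). intros; apply feynman_cont. }
  unfold FInt. split.
  - apply RInt_ge_0; [lra|exact EX|]. intros; apply Hb.
  - apply Rle_trans with (RInt (fun _ => exp (- (x * x))) 0 1).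
    + apply RInt_le; [lra|exact EX|apply ex_RInt_const|]. intros; apply Hb.
    + rewrite RInt_const. unfold scal; simpl; unfold mult; simpl. lra.
Qed.

Lemma EInt_tail x : 0 <= x -> Rabs (EInt x - sqrt PI / 2) <= 2 * exp (- (x * x)).
Proof.
  intros Hx.
  assert (HE : 0 <= EInt x).
  { apply RInt_ge_0; [exact Hx|apply egauss_ex_RInt|].
    intros; unfold egauss; apply Rlt_le, exp_pos. }
  assert (E : EInt x * EInt x = PI / 4 - FInt x) by (generalize (gaussian_identity x); lra).
  assert (HP : sqrt PI * sqrt PI = PI) by (apply sqrt_sqrt; generalize PI_RGT_0; lra).
  assert (HS : 1 < sqrt PI).
  { rewrite <- sqrt_1. apply sqrt_lt_1_alt. generalize PI2_1; lra. }
  generalize (FInt_bounds x); intros HF.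
  assert (Ef : (EInt x - sqrt PI / 2) * (EInt x + sqrt PI / 2) = - FInt x) by nra.
  assert (0 < EInt x + sqrt PI / 2) by lra.
  rewrite Rabs_left1.
  2:{ destruct (Rle_or_lt (EInt x - sqrt PI / 2) 0); [auto|nra]. }
  apply Rle_trans with (FInt x / (EInt x + sqrt PI / 2)).
  - right. field_simplify_eq; [nra|lra].
  - apply Rle_trans with (FInt x / (1 / 2)); [|lra].
    unfold Rdiv. apply Rmult_le_compat_l; [lra|]. apply Rinv_le_contravar; lra.
Qed.

Lemma gauss_cont z : continuous gauss z.
Proof.
  apply (@ex_derive_continuous R_AbsRing R_NormedModule).
  unfold gauss. auto_derive. auto.
Qed.

Lemma gauss_ex_RInt a b : ex_RInt gauss a b.
Proof. apply (@ex_RInt_continuous R_CompleteNormedModule). intros; apply gauss_cont. Qed.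

Lemma gauss_pos t : 0 < gauss t.
Proof. apply exp_pos. Qed.

Lemma gauss_le1 t : gauss t <= 1.
Proof. unfold gauss. rewrite <- exp_0. apply exp_le. nra. Qed.

Lemma gauss_even t : gauss (- t) = gauss t.
Proof. unfold gauss. replace ((- t) ^ 2) with (t ^ 2) by ring. reflexivity. Qed.

Lemma gauss_abs t : gauss t = gauss (Rabs t).
Proof.
  unfold gauss. rewrite <- (pow2_abs t). reflexivity.
Qed.

Lemma gauss_antitone a b : 0 <= a <= b -> gauss b <= gauss a.
Proof. intros. unfold gauss. apply exp_le. simpl. nra. Qed.

(* Crude tail bound gauss T <= 1/T, from e^u >= 1 + u. *)
Lemma gauss_le_inv T : 0 < T -> gauss T <= / T.
Proof.
  intros. unfold gauss. replace (- T ^ 2 / 2) with (- (T ^ 2 / 2)) by field.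
  rewrite exp_Ropp. apply Rinv_le_contravar; [auto|].
  generalize (exp_ineq1_le (T ^ 2 / 2)). simpl. nra.
Qed.

Lemma gauss_deriv t : derivable_pt_lim gauss t (- t * gauss t).
Proof.
  apply is_derive_Reals. unfold gauss. auto_derive; auto.
  replace (- (t * (t * 1)) * / 2) with (- t ^ 2 / 2) by (simpl; field). field.
Qed.

(* |gauss'| <= 1, since |t| <= 1 + t^2/2 <= e^(t^2/2). *)
Lemma gauss_deriv_bound t : Rabs (- t * gauss t) <= 1.
Proof.
  unfold gauss. rewrite Rabs_mult, (Rabs_pos_eq (exp _)) by (apply Rlt_le, exp_pos).
  rewrite Rabs_Ropp. replace (- t ^ 2 / 2) with (- (t ^ 2 / 2)) by field. rewrite exp_Ropp.
  generalize (exp_ineq1_le (t ^ 2 / 2)) (exp_pos (t ^ 2 / 2)); intros H1 H2.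
  apply Rmult_le_reg_r with (exp (t ^ 2 / 2)); [auto|].
  rewrite Rmult_assoc, Rinv_l, Rmult_1_r, Rmult_1_l by lra.
  assert (Rabs t <= 1 + t ^ 2 / 2).
  { rewrite <- (pow2_abs t). generalize (Rabs_pos t). nra. }
  lra.
Qed.

(* gauss is 1-Lipschitz (mean value theorem with [gauss_deriv_bound]). *)
Lemma gauss_lipschitz a b : Rabs (gauss a - gauss b) <= Rabs (a - b).
Proof.
  destruct (MVT_abs gauss (fun t => - t * gauss t) b a) as [c [Hc _]].
  { intros; apply gauss_deriv. }
  rewrite Hc, <- Rmult_1_l. apply Rmult_le_compat_r; [apply Rabs_pos|apply gauss_deriv_bound].
Qed.

Lemma RInt_gauss_chasles a b c : RInt gauss a b + RInt gauss b c = RInt gauss a c.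
Proof. apply (RInt_Chasles (V := R_CompleteNormedModule)); apply gauss_ex_RInt. Qed.

Lemma RInt_gauss_bounds a b : a <= b -> 0 <= RInt gauss a b <= b - a.
Proof.
  intros H. split.
  - apply RInt_ge_0; auto. apply gauss_ex_RInt. intros; apply Rlt_le, gauss_pos.
  - apply Rle_trans with (RInt (fun _ => 1) a b).
    + apply RInt_le; auto. apply gauss_ex_RInt. apply ex_RInt_const. intros; apply gauss_le1.
    + rewrite RInt_const. unfold scal; simpl; unfold mult; simpl. lra.
Qed.

Lemma RInt_gauss_sym T : RInt gauss (- T) 0 = RInt gauss 0 T.
Proof.
  assert (E := RInt_comp_lin (V := R_CompleteNormedModule) gauss (-1) 0 0 T (gauss_ex_RInt _ _)).
  replace (-1 * 0 + 0) with 0 in E by ring. replace (-1 * T + 0) with (-T) in E by ring.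
  rewrite <- (opp_RInt_swap (V := R_CompleteNormedModule)) by apply gauss_ex_RInt.
  rewrite <- E.
  rewrite (RInt_ext (V := R_CompleteNormedModule) _ (fun y => opp (gauss y))).
  2:{ intros; unfold scal, opp; simpl; unfold mult; simpl.
      replace (-1 * x + 0) with (- x) by ring. rewrite gauss_even. ring. }
  rewrite (RInt_opp (V := R_CompleteNormedModule)) by apply gauss_ex_RInt.
  unfold opp; simpl. ring.
Qed.

Lemma RInt_gauss_0_abs x : Rabs (RInt gauss 0 x) <= Rabs x.
Proof.
  destruct (Rle_or_lt 0 x) as [Hx|Hx].
  - generalize (RInt_gauss_bounds 0 x Hx). intros. rewrite !Rabs_pos_eq; lra.
  - generalize (RInt_gauss_bounds x 0 ltac:(lra)) (RInt_gauss_chasles x 0 x).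
    rewrite RInt_point. unfold zero; simpl. intros.
    rewrite Rabs_left1 by lra. rewrite Rabs_left by lra. lra.
Qed.

(* Numerical bounds on sqrt(2 pi), from 3 < pi < 4. *)
Lemma sqrt_2PI_bounds : 2 <= sqrt (2 * PI) <= 3.
Proof.
  generalize PI_4 PI2_3_2; intros. split.
  - apply Rle_trans with (sqrt 4).
    + right; symmetry; apply sqrt_lem_1; lra.
    + apply sqrt_le_1_alt. lra.
  - apply Rle_trans with (sqrt 9).
    + apply sqrt_le_1_alt. lra.
    + right; apply sqrt_lem_1; lra.
Qed.

(* int_0^T gauss = sqrt(2 pi)/2 + O(gauss T), via t = sqrt 2 u and [EInt_tail]. *)
Lemma RInt_gauss_tail T : 0 <= T -> Rabs (RInt gauss 0 T - sqrt (2 * PI) / 2) <= 3 * gauss T.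
Proof.
  intros HT.
  assert (H0 := Rlt_sqrt2_0). assert (H2 : sqrt 2 * sqrt 2 = 2) by (apply sqrt_sqrt; lra).
  assert (Hsub : RInt gauss 0 T = sqrt 2 * EInt (T / sqrt 2)).
  { transitivity (sqrt 2 * RInt (fun y => scal (/ sqrt 2) (egauss (/ sqrt 2 * y + 0))) 0 T).
    - rewrite <- (RInt_scal (V := R_CompleteNormedModule)).
      2:{ apply (@ex_RInt_continuous R_CompleteNormedModule). intros z _.
          apply (@ex_derive_continuous R_AbsRing R_NormedModule).
          unfold egauss, scal; simpl; unfold mult; simpl. auto_derive; auto. }
      apply RInt_ext; intros y _.
      assert (E : egauss (/ sqrt 2 * y + 0) = gauss y).
      { unfold egauss, gauss. f_equal.
        replace ((/ sqrt 2 * y + 0) * (/ sqrt 2 * y + 0)) with (y * y * / (sqrt 2 * sqrt 2))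
          by (field; lra).
        rewrite H2. field. }
      unfold scal; simpl; unfold mult; simpl. rewrite E. field. lra.
    - rewrite (RInt_comp_lin (V := R_CompleteNormedModule)) by apply egauss_ex_RInt.
      unfold EInt. f_equal. f_equal; field; lra. }
  rewrite Hsub, sqrt_mult by (generalize PI_RGT_0; lra).
  replace (sqrt 2 * EInt (T / sqrt 2) - sqrt 2 * sqrt PI / 2)
    with (sqrt 2 * (EInt (T / sqrt 2) - sqrt PI / 2)) by (unfold Rdiv; ring).
  rewrite Rabs_mult, (Rabs_pos_eq (sqrt 2)) by lra.
  assert (HL := EInt_tail (T / sqrt 2) ltac:(apply Rdiv_le_0_compat; lra)).
  replace (exp (- (T / sqrt 2 * (T / sqrt 2)))) with (gauss T) in HL.
  2:{ unfold gauss. f_equal.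
      replace (T / sqrt 2 * (T / sqrt 2)) with (T * T * / (sqrt 2 * sqrt 2)) by (field; lra).
      rewrite H2. field. }
  assert (sqrt 2 < 1.5) by nra.
  generalize (gauss_pos T). nra.
Qed.

(* The total mass over any interval is at most 2 * (9/4) <= 9. *)
Lemma RInt_gauss_le9 a b : a <= b -> 0 <= RInt gauss a b <= 9.
Proof.
  intros Hab. split; [apply RInt_gauss_bounds; auto|].
  set (M := Rabs a + Rabs b).
  assert (HM : - M <= a /\ b <= M).
  { unfold M. generalize (Rle_abs a) (Rle_abs (-a)) (Rle_abs b) (Rle_abs (-b))
      (Rabs_pos a) (Rabs_pos b). rewrite !Rabs_Ropp. lra. }
  assert (HM0 : 0 <= M) by lra.
  assert (HI : RInt gauss 0 M <= 9 / 2).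
  { generalize (RInt_gauss_tail M HM0) sqrt_2PI_bounds (gauss_le1 M).
    intros H1 H2 H3. apply abs_le_inv in H1. lra. }
  generalize (RInt_gauss_chasles (- M) a b) (RInt_gauss_chasles (- M) b M)
    (RInt_gauss_chasles (- M) 0 M) (RInt_gauss_sym M)
    (RInt_gauss_bounds (- M) a ltac:(lra)) (RInt_gauss_bounds b M ltac:(lra)).
  lra.
Qed.

(* One cell of a left Riemann sum: the error is at most h^2 (gauss is 1-Lipschitz). *)
Lemma RInt_gauss_cell a h : 0 <= h -> Rabs (RInt gauss a (a + h) - h * gauss a) <= h * h.
Proof.
  intros Hh.
  replace (h * gauss a) with (RInt (fun _ => gauss a) a (a + h)).
  2:{ rewrite RInt_const. unfold scal; simpl; unfold mult; simpl. ring. }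
  rewrite <- (RInt_minus (V := R_CompleteNormedModule))
    by (apply gauss_ex_RInt || apply ex_RInt_const).
  replace (h * h) with ((a + h - a) * h) by ring.
  apply abs_RInt_le_const; [lra| |].
  - apply (@ex_RInt_minus R_NormedModule); [apply gauss_ex_RInt|apply ex_RInt_const].
  - intros t Ht. unfold minus, plus, opp; simpl.
    apply Rle_trans with (Rabs (t - a)); [apply gauss_lipschitz|].
    rewrite Rabs_pos_eq; lra.
Qed.

Definition grid (m s : R) (k : nat) : R := (INR k - m) / s.

Definition in_window (L U k : nat) : bool := andb (Nat.leb L k) (Nat.ltb k U).

Lemma grid_S m s k : 0 < s -> grid m s (S k) = grid m s k + 1 / s.
Proof. intros. unfold grid. rewrite S_INR. field. lra. Qed.

Lemma grid_le m s i j : 0 < s -> (i <= j)%nat -> grid m s i <= grid m s j.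
Proof.
  intros Hs Hij. unfold grid, Rdiv. apply Rmult_le_compat_r.
  - apply Rlt_le, Rinv_0_lt_compat; auto.
  - apply le_INR in Hij. lra.
Qed.

Lemma grid_lt m s i j : 0 < s -> (i < j)%nat -> grid m s i < grid m s j.
Proof.
  intros Hs Hij. unfold grid, Rdiv. apply Rmult_lt_compat_r.
  - apply Rinv_0_lt_compat; auto.
  - apply lt_INR in Hij. lra.
Qed.

Lemma sum_window_const c L U Q : (L <= U)%nat ->
  sum_f_R0 (fun k => if in_window L U k then c else 0) Q
  = c * (INR (Nat.min U (S Q)) - INR (Nat.min L (S Q))).
Proof.
  intros HLU. induction Q as [|Q IH].
  - unfold sum_f_R0, in_window.
    destruct L as [|L]; destruct U as [|U]; try lia.
    + replace (Nat.min 0 1) with 0%nat by lia. simpl; ring.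
    + replace (Nat.min (S U) 1) with 1%nat by lia. replace (Nat.min 0 1) with 0%nat by lia.
      simpl; ring.
    + replace (Nat.min (S U) 1) with 1%nat by lia. replace (Nat.min (S L) 1) with 1%nat by lia.
      simpl; ring.
  - assert (Hmin : forall V, INR (Nat.min V (S (S Q)))
                         = INR (Nat.min V (S Q)) + (if Nat.ltb (S Q) V then 1 else 0)).
    { intros V. destruct (Nat.ltb_spec (S Q) V).
      - rewrite !Nat.min_r by lia. rewrite (S_INR (S Q)). ring.
      - rewrite !Nat.min_l by lia. ring. }
    simpl sum_f_R0. rewrite IH, !Hmin. unfold in_window.
    destruct (Nat.leb_spec L (S Q)); destruct (Nat.ltb_spec (S Q) U);
      destruct (Nat.ltb_spec (S Q) L); simpl; try lia; ring.
Qed.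

Lemma sum_window_const_le c L U Q : 0 <= c -> (L <= U)%nat ->
  sum_f_R0 (fun k => if in_window L U k then c else 0) Q <= c * INR (U - L).
Proof.
  intros Hc HLU. rewrite sum_window_const by auto. apply Rmult_le_compat_l; auto.
  rewrite <- minus_INR by lia. apply le_INR. lia.
Qed.

Definition cell_of (m s b : R) (k : nat) : R :=
  if Rle_dec (grid m s k) b then (if Rlt_dec b (grid m s (S k)) then 1 else 0) else 0.

(* At most one cell contains b (the sum telescopes to an indicator). *)
Lemma sum_cell_of_le1 m s b Q : 0 < s -> sum_f_R0 (cell_of m s b) Q <= 1.
Proof.
  intros Hs.
  assert (E : sum_f_R0 (cell_of m s b) Q =
    if Rle_dec (grid m s O) b then (if Rlt_dec b (grid m s (S Q)) then 1 else 0) else 0).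
  { induction Q as [|Q IH]; [reflexivity|].
    simpl sum_f_R0. rewrite IH. unfold cell_of.
    assert (grid m s (S Q) < grid m s (S (S Q))) by (apply grid_lt; auto).
    assert (grid m s O <= grid m s (S Q)) by (apply grid_le; [auto|lia]).
    destruct (Rle_dec (grid m s 0) b); destruct (Rlt_dec b (grid m s (S Q)));
    destruct (Rle_dec (grid m s (S Q)) b); destruct (Rlt_dec b (grid m s (S (S Q)))); lra. }
  rewrite E. destruct (Rle_dec _ _); [destruct (Rlt_dec _ _)|]; lra.
Qed.

Lemma telescope_RInt_gauss f Q :
  sum_f_R0 (fun k => RInt gauss (f k) (f (S k))) Q = RInt gauss (f O) (f (S Q)).
Proof.
  induction Q as [|Q IH]; [reflexivity|].
  simpl sum_f_R0. rewrite IH. apply RInt_gauss_chasles.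
Qed.

Definition riemann_term (m s b : R) (L U : nat) (k : nat) : R :=
  if in_window L U k then (if Rle_dec (grid m s k) b then gauss (grid m s k) / s else 0) else 0.

(* Projection of t onto [a, b]; clamping the grid splits [t_L, b] into cells. *)
Definition clamp (a b t : R) : R := Rmax a (Rmin b t).

Lemma cell_of_nonneg m s b k : 0 <= cell_of m s b k.
Proof. unfold cell_of. destruct (Rle_dec _ _); [destruct (Rlt_dec _ _)|]; lra. Qed.

Lemma clamp_outside_window m s b L U k : 0 < s -> (L <= U)%nat -> b <= grid m s U ->
  in_window L U k = false ->
  clamp (grid m s L) b (grid m s k) = clamp (grid m s L) b (grid m s (S k)).
Proof.
  intros Hs HLU Hb Hk. unfold in_window, clamp in *.
  destruct (Nat.leb_spec L k); destruct (Nat.ltb_spec k U); simpl in Hk; try discriminate.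
  - assert (grid m s U <= grid m s k) by (apply grid_le; auto).
    assert (grid m s U <= grid m s (S k)) by (apply grid_le; [auto|lia]).
    rewrite (Rmin_left b (grid m s k)), (Rmin_left b (grid m s (S k))) by lra. reflexivity.
  - assert (grid m s (S k) <= grid m s L) by (apply grid_le; [auto|lia]).
    assert (grid m s k <= grid m s (S k)) by (apply grid_le; [auto|lia]).
    rewrite (Rmax_left _ (Rmin b (grid m s k)))
      by (apply Rle_trans with (grid m s k); [apply Rmin_r|lra]).
    rewrite (Rmax_left _ (Rmin b (grid m s (S k))))
      by (apply Rle_trans with (grid m s (S k)); [apply Rmin_r|lra]).
    reflexivity.
  - lia.
Qed.

(* Inside the window: a full cell costs 1/s^2 (Lipschitz), the cell containing b
   costs 1/s, and cells beyond b cost nothing. *)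
Lemma riemann_cell_inside m s b L k : 0 < s -> (L <= k)%nat -> grid m s L <= b ->
  Rabs ((if Rle_dec (grid m s k) b then gauss (grid m s k) / s else 0)
        - RInt gauss (clamp (grid m s L) b (grid m s k)) (clamp (grid m s L) b (grid m s (S k))))
  <= 1 / (s * s) + cell_of m s b k * / s.
Proof.
  intros Hs HLk Hb. unfold cell_of, clamp.
  assert (HS := grid_S m s k Hs).
  assert (0 < 1 / s) by (apply Rdiv_lt_0_compat; lra).
  assert (0 <= 1 / (s * s)) by (apply Rlt_le, Rdiv_lt_0_compat; nra).
  assert (0 <= / s) by (apply Rlt_le, Rinv_0_lt_compat; lra).
  assert (grid m s L <= grid m s k) by (apply grid_le; auto).
  destruct (Rle_dec (grid m s k) b) as [Hk|Hk].
  - rewrite (Rmin_right b (grid m s k)), (Rmax_right _ (grid m s k)) by lra.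
    destruct (Rlt_dec b (grid m s (S k))) as [Hk1|Hk1].
    + rewrite (Rmin_left b), (Rmax_right _ b) by lra.
      assert (HI := RInt_gauss_bounds (grid m s k) b Hk).
      generalize (gauss_pos (grid m s k)) (gauss_le1 (grid m s k)); intros.
      assert (gauss (grid m s k) / s <= 1 / s).
      { unfold Rdiv; apply Rmult_le_compat_r; [apply Rlt_le, Rinv_0_lt_compat|]; lra. }
      assert (0 <= gauss (grid m s k) / s) by (apply Rlt_le, Rdiv_lt_0_compat; lra).
      apply Rabs_le. lra.
    + rewrite (Rmin_right b), (Rmax_right _ (grid m s (S k))) by lra.
      rewrite HS. replace (gauss (grid m s k) / s) with (1 / s * gauss (grid m s k))
        by (field; lra).
      rewrite Rabs_minus_sym. eapply Rle_trans; [apply RInt_gauss_cell; lra|].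
      assert (1 / s * (1 / s) = 1 / (s * s)) by (field; lra). lra.
  - rewrite (Rmin_left b (grid m s k)), (Rmin_left b (grid m s (S k))) by lra.
    rewrite RInt_point. unfold zero; simpl. rewrite Rminus_0_r, Rabs_R0. lra.
Qed.

Lemma riemann_cell m s b L U k : 0 < s -> (L <= U)%nat ->
  grid m s L <= b <= grid m s U ->
  Rabs (riemann_term m s b L U k
        - RInt gauss (clamp (grid m s L) b (grid m s k)) (clamp (grid m s L) b (grid m s (S k))))
  <= (if in_window L U k then 1 / (s * s) else 0) + cell_of m s b k * / s.
Proof.
  intros Hs HLU Hb. unfold riemann_term.
  assert (0 <= cell_of m s b k * / s)
    by (apply Rmult_le_pos; [apply cell_of_nonneg|apply Rlt_le, Rinv_0_lt_compat; lra]).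
  destruct (in_window L U k) eqn:Hk.
  - apply riemann_cell_inside; [auto| |lra].
    unfold in_window in Hk. apply andb_prop in Hk. apply Nat.leb_le, Hk.
  - rewrite (clamp_outside_window m s b L U k Hs HLU ltac:(lra) Hk), RInt_point.
    unfold zero; simpl. rewrite Rminus_0_r, Rabs_R0. lra.
Qed.

Lemma riemann_window m s b L U Q : 0 < s -> (L <= U)%nat -> (U <= Q)%nat ->
  grid m s L <= b <= grid m s U ->
  Rabs (sum_f_R0 (riemann_term m s b L U) Q - RInt gauss (grid m s L) b)
  <= INR (U - L) / (s * s) + 1 / s.
Proof.
  intros Hs HLU HUQ Hb.
  assert (E : RInt gauss (grid m s L) b =
     sum_f_R0 (fun k => RInt gauss (clamp (grid m s L) b (grid m s k))
                                   (clamp (grid m s L) b (grid m s (S k)))) Q).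
  { rewrite (telescope_RInt_gauss (fun k => clamp (grid m s L) b (grid m s k))).
    unfold clamp. assert (grid m s O <= grid m s L) by (apply grid_le; [auto|lia]).
    assert (grid m s U <= grid m s (S Q)) by (apply grid_le; [auto|lia]).
    rewrite (Rmin_right b (grid m s O)), (Rmax_left _ (grid m s O)) by lra.
    rewrite (Rmin_left b), Rmax_right by lra. reflexivity. }
  rewrite E, <- minus_sum.
  eapply Rle_trans; [apply Rsum_abs|].
  eapply Rle_trans; [apply sum_Rle; intros k _; apply riemann_cell; auto|].
  rewrite plus_sum. apply Rplus_le_compat.
  - eapply Rle_trans; [apply sum_window_const_le; [apply Rlt_le, Rdiv_lt_0_compat; nra|auto]|].
    right. field. lra.
  - rewrite <- scal_sum. unfold Rdiv. rewrite Rmult_1_l.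
    rewrite <- (Rmult_1_r (/ s)) at 2. apply Rmult_le_compat_l.
    + apply Rlt_le, Rinv_0_lt_compat; auto.
    + apply sum_cell_of_le1; auto.
Qed.

Lemma binomial_pos n k : 0 < Binomial.C n k.
Proof.
  unfold Binomial.C. apply Rdiv_lt_0_compat; [apply INR_fact_lt_0|].
  apply Rmult_lt_0_compat; apply INR_fact_lt_0.
Qed.

Lemma bweight_pos p q k : 0 < bweight p q k.
Proof. unfold bweight. apply Rmult_lt_0_compat; apply binomial_pos. Qed.

Definition ratio (p q : nat) (k : nat) : R :=
  (INR q - INR k) * (INR p + INR k + 1) / ((INR k + 1) * (INR k + 1)).

Lemma binomial_diag_step p k :
  Binomial.C (p + S k) (S k) = (INR p + INR k + 1) / (INR k + 1) * Binomial.C (p + k) k.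
Proof.
  unfold Binomial.C.
  replace (p + S k - S k)%nat with p by lia. replace (p + k - k)%nat with p by lia.
  replace (p + S k)%nat with (S (p + k)) by lia.
  rewrite !fact_simpl, !mult_INR, !S_INR, plus_INR.
  generalize (INR_fact_lt_0 (p + k)) (INR_fact_lt_0 k) (INR_fact_lt_0 p) (pos_INR k) (pos_INR p).
  intros. field. repeat split; lra.
Qed.

(* w_(k+1) = w_k r_k, by Pascal's rule for the first factor. *)
Lemma bweight_step p q k : (k < q)%nat -> bweight p q (S k) = bweight p q k * ratio p q k.
Proof.
  intros H. unfold bweight, ratio.
  rewrite pascal_step3, binomial_diag_step by auto. rewrite minus_INR by lia. rewrite S_INR.
  generalize (pos_INR k); intros. field. lra.
Qed.

Lemma ratio_pos p q k : (k < q)%nat -> 0 < ratio p q k.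
Proof.
  intros Hk. unfold ratio. apply lt_INR in Hk. generalize (pos_INR k) (pos_INR p); intros.
  apply Rdiv_lt_0_compat; nra.
Qed.

Lemma ratio_antitone_step p q k : (S k < q)%nat -> ratio p q (S k) <= ratio p q k.
Proof.
  intros Hkq. apply lt_INR in Hkq. rewrite S_INR in Hkq.
  unfold ratio. rewrite S_INR. generalize (pos_INR k) (pos_INR p); intros Hk Hp.
  set (a := INR k + 1) in *.
  replace (INR k + 1 + 1) with (a + 1) by (unfold a; ring).
  replace (INR q - (INR k + 1)) with (INR q - a) by (unfold a; ring).
  replace (INR p + (INR k + 1) + 1) with (INR p + a + 1) by (unfold a; ring).
  replace (INR p + INR k + 1) with (INR p + a) by (unfold a; ring).
  replace (INR q - INR k) with (INR q - a + 1) by (unfold a; ring).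
  assert (Ha : 1 <= a) by (unfold a; lra). clearbody a.
  set (X := INR q - a). assert (HX : 0 <= X) by (unfold X; lra). clearbody X.
  set (P := INR p) in *. clearbody P.
  apply div_le; [nra|nra|].
  assert (H1 : (P + a + 1) * (a * a) <= (P + a) * ((a + 1) * (a + 1))) by nra.
  assert (X * ((P + a + 1) * (a * a)) <= X * ((P + a) * ((a + 1) * (a + 1))))
    by (apply Rmult_le_compat_l; auto).
  assert (0 <= (P + a) * ((a + 1) * (a + 1))) by nra.
  nra.
Qed.

Lemma ratio_antitone p q i j : (i <= j)%nat -> (j < q)%nat -> ratio p q j <= ratio p q i.
Proof.
  intros Hij Hjq. induction j as [|j IH].
  - replace i with 0%nat by lia. lra.
  - destruct (Nat.eq_dec i (S j)) as [->|Hne]; [lra|].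
    apply Rle_trans with (ratio p q j); [apply ratio_antitone_step; lia|apply IH; lia].
Qed.

(* With A = q - m and
   B = p + m, m solves A B = m^2 (the ratio equals 1 to first order at k = m),
   and 1/s^2 = 1/A - 1/B + 2/m is the curvature of the log-weights there. *)

Section Centering.
Variables p q : nat.
Hypothesis Hp : 1 <= INR p.
Hypothesis Hpq : INR p <= INR q.

Lemma sqrt_disc_sq : sqrt (disc p q) * sqrt (disc p q) = disc p q.
Proof. apply sqrt_sqrt. unfold disc. nra. Qed.

Lemma sqrt_disc_bounds : INR p + INR q <= sqrt (disc p q) <= 3 / 2 * (INR p + INR q).
Proof.
  generalize sqrt_disc_sq (sqrt_pos (disc p q)); intros H1 H2. unfold disc in *.
  set (r := sqrt _) in *. split; nra.
Qed.

Lemma m_balance : (INR q - m_pq p q) * (INR p + m_pq p q) = m_pq p q * m_pq p q.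
Proof.
  generalize sqrt_disc_sq; intros H1. unfold m_pq, disc in *.
  set (r := sqrt _) in *. nra.
Qed.

Lemma m_lower : INR q / 2 <= m_pq p q.
Proof. generalize sqrt_disc_bounds; intros. unfold m_pq. lra. Qed.

Lemma q_minus_m_lower : INR q / 4 <= INR q - m_pq p q.
Proof. generalize sqrt_disc_bounds; intros. unfold m_pq. lra. Qed.

Lemma s2_formula : s2_pq p q = m_pq p q * m_pq p q / sqrt (disc p q).
Proof.
  generalize sqrt_disc_sq sqrt_disc_bounds; intros H1 H2. unfold s2_pq, m_pq, disc in *.
  set (r := sqrt _) in *. field_simplify_eq; [nra|lra].
Qed.

Lemma s2_bounds : INR q / 12 <= s2_pq p q <= INR q / 4.
Proof.
  generalize sqrt_disc_bounds; intros [H1 H2]. unfold s2_pq.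
  set (r := sqrt (disc p q)) in *.
  assert ((INR p + INR q) ^ 2 / (8 * r) <= (INR p + INR q) / 8) by (apply div_le; nra).
  assert ((INR p + INR q) / 12 <= (INR p + INR q) ^ 2 / (8 * r)) by (apply div_le; nra).
  lra.
Qed.

Lemma inv_s2_formula :
  / s2_pq p q = / (INR q - m_pq p q) - / (INR p + m_pq p q) + 2 / m_pq p q.
Proof.
  generalize m_balance s2_formula m_lower q_minus_m_lower sqrt_disc_bounds.
  intros E1 E2 H1 H2 H3. rewrite E2.
  assert (E3 : 4 * m_pq p q = INR q - INR p + sqrt (disc p q)) by (unfold m_pq; field).
  set (m := m_pq p q) in *. set (r := sqrt (disc p q)) in *.
  field_simplify_eq; try lra. nra.
Qed.

Lemma s_sq : s_pq p q * s_pq p q = s2_pq p q.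
Proof. unfold s_pq. apply sqrt_sqrt. generalize s2_bounds (pos_INR q). lra. Qed.

Lemma s_pos : 0 < s_pq p q.
Proof. unfold s_pq. apply sqrt_lt_R0. generalize s2_bounds; lra. Qed.

End Centering.

Lemma ln_approx u : -1/2 <= u <= 1/2 -> Rabs (ln (1 + u) - u) <= 2 * (u * u).
Proof.
  intros Hu.
  assert (Hlin : forall x, 0 < x -> ln x <= x - 1).
  { intros x Hx. generalize (exp_ineq1_le (ln x)). rewrite exp_ln; auto. lra. }
  assert (H1 := Hlin (1 + u) ltac:(lra)).
  assert (H2 := Hlin (/ (1 + u)) ltac:(apply Rinv_0_lt_compat; lra)).
  rewrite ln_Rinv in H2 by lra.
  assert (/ (1 + u) - 1 <= u * u - u + u * u).
  { replace (/ (1 + u) - 1) with (- u / (1 + u)) by (field; lra).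
    apply Rmult_le_reg_r with (1 + u); [lra|].
    replace (- u / (1 + u) * (1 + u)) with (- u) by (field; lra). nra. }
  apply Rabs_le. nra.
Qed.

Lemma abs_div_le x y c Y : 0 < Y -> Y <= y -> Rabs x <= c -> Rabs (x / y) <= c / Y.
Proof.
  intros HY Hy Hx. unfold Rdiv. rewrite Rabs_mult, Rabs_inv, (Rabs_pos_eq y) by lra.
  apply Rmult_le_compat; [apply Rabs_pos|apply Rlt_le, Rinv_0_lt_compat; lra|auto|].
  apply Rinv_le_contravar; lra.
Qed.

Lemma sq_le_of_abs_le x c : Rabs x <= c -> x * x <= c * c.
Proof.
  intros Hx. rewrite <- (Rabs_pos_eq (x * x)), Rabs_mult by nra.
  generalize (Rabs_pos x). nra.
Qed.

Section LogRatio.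
Variables p q : nat.
Hypothesis Hp : 1 <= INR p.
Hypothesis Hpq : INR p <= INR q.

(* With d = k + 1 - m, the ratio factors as (1 + a)(1 + b)/(1 + e)^2 with
   a = (1 - d)/A, b = d/B, e = d/m, while d/s^2 = 1/A - a - b + 2e. *)
Lemma ln_ratio_expansion i : (i < q)%nat ->
  let m := m_pq p q in let d := INR i + 1 - m in
  let a := (1 - d) / (INR q - m) in let b := d / (INR p + m) in let e := d / m in
  -1/2 <= a -> -1/2 <= b -> -1/2 <= e ->
  ln (ratio p q i) + d / s2_pq p q
  = (ln (1 + a) - a) + (ln (1 + b) - b) - 2 * (ln (1 + e) - e) + / (INR q - m).
Proof.
  intros Hi m d a b e Ha Hb He.
  generalize (m_balance p q Hp Hpq) (m_lower p q Hp Hpq) (q_minus_m_lower p q Hp Hpq)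
    (inv_s2_formula p q Hp Hpq); intros E1 H1 H2 E2.
  fold m in E1, H1, H2, E2.
  assert (Er : ratio p q i = (1 + a) * (1 + b) * / ((1 + e) * (1 + e))).
  { unfold ratio, a, b, e. replace (INR i) with (d + m - 1) by (unfold d; ring).
    replace ((1 + (1 - d) / (INR q - m)) * (1 + d / (INR p + m)))
      with ((INR q - m + 1 - d) * (INR p + m + d) / ((INR q - m) * (INR p + m))) by (field; lra).
    replace ((1 + d / m) * (1 + d / m)) with ((m + d) * (m + d) / (m * m)) by (field; lra).
    rewrite E1. field. unfold d in *. generalize (pos_INR i). lra. }
  rewrite Er, ln_mult, ln_mult, ln_Rinv, ln_mult by (try apply Rinv_0_lt_compat; nra).
  unfold Rdiv at 1. rewrite E2. unfold a, b, e. field.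
  unfold d in *. repeat split; lra.
Qed.

Lemma ln_ratio_estimate i D : (i < q)%nat -> 0 <= D -> 8 * (1 + D) <= INR q ->
  Rabs (INR i + 1 - m_pq p q) <= D ->
  Rabs (ln (ratio p q i) + (INR i + 1 - m_pq p q) / s2_pq p q)
  <= 4 / INR q + 56 * ((1 + D) * (1 + D)) / (INR q * INR q).
Proof.
  intros Hi HD HQD Hd.
  generalize (m_lower p q Hp Hpq) (q_minus_m_lower p q Hp Hpq); intros H1 H2.
  pose proof (ln_ratio_expansion i Hi) as Ex. cbv zeta in Ex.
  set (m := m_pq p q) in *. set (Q := INR q) in *.
  set (d := INR i + 1 - m) in *.
  set (a := (1 - d) / (Q - m)) in *. set (b := d / (INR p + m)) in *. set (e := d / m) in *.
  assert (Ha : Rabs a <= 4 * (1 + D) / Q).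
  { replace (4 * (1 + D) / Q) with ((1 + D) / (Q / 4)) by (field; lra).
    apply abs_div_le; [lra|lra|].
    unfold Rminus at 1. eapply Rle_trans; [apply Rabs_triang|].
    rewrite Rabs_R1, Rabs_Ropp. lra. }
  assert (Hb : Rabs b <= 2 * D / Q).
  { replace (2 * D / Q) with (D / (Q / 2)) by (field; lra). apply abs_div_le; lra. }
  assert (He : Rabs e <= 2 * D / Q).
  { replace (2 * D / Q) with (D / (Q / 2)) by (field; lra). apply abs_div_le; lra. }
  assert (4 * (1 + D) / Q <= 1 / 2) by (apply div_le_k; lra).
  assert (2 * D / Q <= 1 / 4) by (apply div_le_k; lra).
  apply abs_le_inv in Ha as Ra. apply abs_le_inv in Hb as Rb. apply abs_le_inv in He as Re.
  rewrite Ex by lra.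
  generalize (ln_approx a ltac:(lra)) (ln_approx b ltac:(lra)) (ln_approx e ltac:(lra)).
  intros La Lb Le.
  assert (HA : 0 < / (Q - m) <= 4 / Q).
  { split; [apply Rinv_0_lt_compat; lra|].
    apply Rle_trans with (/ (Q / 4)); [apply Rinv_le_contravar; lra|right; field; lra]. }
  assert (Sa := sq_le_of_abs_le a _ Ha). assert (Sb := sq_le_of_abs_le b _ Hb).
  assert (Se := sq_le_of_abs_le e _ He).
  assert (HQQ : 0 < Q * Q) by nra.
  replace (4 * (1 + D) / Q * (4 * (1 + D) / Q)) with (16 * ((1 + D) * (1 + D)) / (Q * Q))
    in Sa by (field; lra).
  replace (2 * D / Q * (2 * D / Q)) with (4 * (D * D) / (Q * Q)) in Sb, Se by (field; lra).
  assert (4 * (D * D) / (Q * Q) <= 4 * ((1 + D) * (1 + D)) / (Q * Q)).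
  { apply Rmult_le_compat_r; [apply Rlt_le, Rinv_0_lt_compat; lra|nra]. }
  replace (56 * ((1 + D) * (1 + D)) / (Q * Q))
    with (2 * (16 * ((1 + D) * (1 + D)) / (Q * Q)) + 6 * (4 * ((1 + D) * (1 + D)) / (Q * Q)))
    by (field; lra).
  apply abs_le_inv in La. apply abs_le_inv in Lb. apply abs_le_inv in Le.
  apply Rabs_le. lra.
Qed.
End LogRatio.

(* Since the ratio is nonincreasing, beyond an index U where
   r_U < 1 the weights are dominated by w_U r_U^(k-U), and below an index L with
   r_(L-1) > 1 by w_L r_(L-1)^(k-L); summing the geometric series bounds both
   tails by a multiple of the weight at the boundary. *)

Lemma sum_telescope (a : nat -> R) N : sum_f_R0 (fun k => a (S k) - a k) N = a (S N) - a O.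
Proof. induction N as [|N IH]; simpl; [ring|]. rewrite IH. ring. Qed.

Lemma pow_unit_interval r n : 0 <= r <= 1 -> 0 <= r ^ n <= 1.
Proof. intros. induction n; simpl; nra. Qed.

Lemma geometric_upper (rho : R) U N : 0 <= rho <= 1 ->
  sum_f_R0 (fun k => if Nat.leb U k then rho ^ (k - U) else 0) N * (1 - rho) <= 1.
Proof.
  intros Hr.
  set (a := fun k => if Nat.leb U k then rho ^ (k - U) else 1).
  assert (Ha : forall k, 0 <= a k <= 1).
  { intros k; unfold a. destruct (Nat.leb U k); [apply pow_unit_interval; auto|lra]. }
  rewrite Rmult_comm, scal_sum.
  replace (sum_f_R0 _ N) with (- sum_f_R0 (fun k => a (S k) - a k) N).
  - rewrite sum_telescope. generalize (Ha O) (Ha (S N)). lra.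
  - rewrite <- (Rmult_1_l (sum_f_R0 (fun k => a (S k) - a k) N)).
    rewrite Ropp_mult_distr_l, scal_sum. apply sum_eq. intros k _. unfold a.
    destruct (Nat.leb_spec U k); destruct (Nat.leb_spec U (S k)); try lia.
    + replace (S k - U)%nat with (S (k - U)) by lia. simpl. ring.
    + replace U with (S k) by lia. rewrite Nat.sub_diag. simpl. ring.
    + ring.
Qed.

Lemma geometric_lower (rho : R) L N : 0 <= rho <= 1 ->
  sum_f_R0 (fun k => if Nat.ltb k L then rho ^ (L - k) else 0) N * (1 - rho) <= 1.
Proof.
  intros Hr.
  set (b := fun k => if Nat.leb k L then rho ^ (L - k) else 1).
  assert (Hb : forall k, 0 <= b k <= 1).
  { intros k; unfold b. destruct (Nat.leb k L); [apply pow_unit_interval; auto|lra]. }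
  rewrite Rmult_comm, scal_sum.
  apply Rle_trans with (sum_f_R0 (fun k => b (S k) - b k) N).
  - apply sum_Rle. intros k _. unfold b.
    destruct (Nat.ltb_spec k L); destruct (Nat.leb_spec k L); destruct (Nat.leb_spec (S k) L);
      try lia.
    + replace (L - k)%nat with (S (L - S k)) by lia. simpl.
      generalize (pow_unit_interval rho (L - S k) Hr). set (X := rho ^ (L - S k)). intros HX.
      assert (0 <= X * ((1 - rho) * (1 - rho))) by (apply Rmult_le_pos; nra). nra.
    + replace k with L by lia. rewrite Nat.sub_diag. simpl. lra.
    + lra.
  - rewrite sum_telescope. generalize (Hb O) (Hb (S N)). lra.
Qed.

Section Tails.
Variables p q : nat.

(* Domination by geometric sequences, from the monotonicity of the ratio. *)
Lemma bweight_upper_geometric U j : (U + j <= q)%nat ->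
  bweight p q (U + j) <= bweight p q U * ratio p q U ^ j.
Proof.
  induction j as [|j IH]; intros H.
  - rewrite Nat.add_0_r. simpl. lra.
  - replace (U + S j)%nat with (S (U + j)) by lia.
    rewrite bweight_step by lia.
    assert (0 < bweight p q (U + j)) by apply bweight_pos.
    assert (ratio p q (U + j) <= ratio p q U) by (apply ratio_antitone; lia).
    assert (0 < ratio p q (U + j)) by (apply ratio_pos; lia).
    assert (0 < ratio p q U) by (apply ratio_pos; lia).
    specialize (IH ltac:(lia)). simpl.
    apply Rle_trans with (bweight p q (U + j) * ratio p q U);
      [apply Rmult_le_compat_l; lra|].
    replace (bweight p q U * (ratio p q U * ratio p q U ^ j))
      with (bweight p q U * ratio p q U ^ j * ratio p q U) by ring.
    apply Rmult_le_compat_r; lra.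
Qed.

Lemma bweight_lower_geometric L j : (1 <= L)%nat -> (L <= q)%nat -> (j <= L)%nat ->
  bweight p q (L - j) <= bweight p q L * (/ ratio p q (L - 1)) ^ j.
Proof.
  intros H1 H2. induction j as [|j IH]; intros H.
  - rewrite Nat.sub_0_r. simpl. lra.
  - specialize (IH ltac:(lia)).
    assert (E : bweight p q (L - j) = bweight p q (L - S j) * ratio p q (L - S j)).
    { replace (L - j)%nat with (S (L - S j)) by lia. apply bweight_step. lia. }
    assert (0 < ratio p q (L - 1)) by (apply ratio_pos; lia).
    assert (ratio p q (L - 1) <= ratio p q (L - S j)) by (apply ratio_antitone; lia).
    assert (0 < bweight p q (L - S j)) by apply bweight_pos.
    assert (0 <= / ratio p q (L - 1)) by (apply Rlt_le, Rinv_0_lt_compat; auto).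
    assert (Hstep : bweight p q (L - S j) <= bweight p q (L - j) * / ratio p q (L - 1)).
    { rewrite E, Rmult_assoc. rewrite <- (Rmult_1_r (bweight p q (L - S j))) at 1.
      apply Rmult_le_compat_l; [lra|].
      apply Rmult_le_reg_r with (ratio p q (L - 1)); [auto|].
      rewrite Rmult_assoc, Rinv_l by lra. nra. }
    simpl. eapply Rle_trans; [apply Hstep|].
    replace (bweight p q L * (/ ratio p q (L - 1) * (/ ratio p q (L - 1)) ^ j)) with
      (bweight p q L * (/ ratio p q (L - 1)) ^ j * / ratio p q (L - 1)) by ring.
    apply Rmult_le_compat_r; auto.
Qed.

Lemma upper_tail U : (U < q)%nat -> ratio p q U < 1 ->
  sum_f_R0 (fun k => if Nat.leb U k then bweight p q k else 0) q * (1 - ratio p q U)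
  <= bweight p q U.
Proof.
  intros HU Hr.
  assert (H0 : 0 <= ratio p q U) by (apply Rlt_le, ratio_pos; lia).
  set (A := sum_f_R0 (fun k => if Nat.leb U k then bweight p q k else 0) q).
  set (G := sum_f_R0 (fun k => if Nat.leb U k then ratio p q U ^ (k - U) else 0) q).
  assert (HAG : A <= bweight p q U * G).
  { unfold A, G. rewrite scal_sum. apply sum_Rle. intros k Hk. destruct (Nat.leb_spec U k).
    - assert (bweight p q (U + (k - U)) <= bweight p q U * ratio p q U ^ (k - U))
        by (apply bweight_upper_geometric; lia).
      replace (U + (k - U))%nat with k in * by lia. lra.
    - lra. }
  generalize (geometric_upper (ratio p q U) U q ltac:(lra)) (bweight_pos p q U). fold G.
  intros. assert (A * (1 - ratio p q U) <= bweight p q U * G * (1 - ratio p q U))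
    by (apply Rmult_le_compat_r; lra).
  nra.
Qed.

Lemma lower_tail L : (1 <= L)%nat -> (L <= q)%nat -> 1 < ratio p q (L - 1) ->
  sum_f_R0 (fun k => if Nat.ltb k L then bweight p q k else 0) q * (1 - / ratio p q (L - 1))
  <= bweight p q L.
Proof.
  intros H1 HL Hr.
  set (rho := / ratio p q (L - 1)).
  assert (Hrho : 0 <= rho <= 1).
  { unfold rho. split; [apply Rlt_le, Rinv_0_lt_compat; lra|].
    rewrite <- Rinv_1. apply Rinv_le_contravar; lra. }
  set (A := sum_f_R0 (fun k => if Nat.ltb k L then bweight p q k else 0) q).
  set (G := sum_f_R0 (fun k => if Nat.ltb k L then rho ^ (L - k) else 0) q).
  assert (HAG : A <= bweight p q L * G).
  { unfold A, G. rewrite scal_sum. apply sum_Rle. intros k Hk. destruct (Nat.ltb_spec k L).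
    - assert (bweight p q (L - (L - k)) <= bweight p q L * rho ^ (L - k))
        by (apply bweight_lower_geometric; lia).
      replace (L - (L - k))%nat with k in * by lia. lra.
    - lra. }
  generalize (geometric_lower rho L q Hrho) (bweight_pos p q L). fold G.
  intros. assert (A * (1 - rho) <= bweight p q L * G * (1 - rho))
    by (apply Rmult_le_compat_r; lra).
  nra.
Qed.

End Tails.

Lemma exp_small d : 0 <= d <= 1/2 -> exp d - 1 <= 2 * d.
Proof.
  intros. generalize (exp_ineq1_le (- d)). intros H1.
  assert (exp d * exp (- d) = 1)
    by (rewrite <- exp_plus; replace (d + - d) with 0 by ring; apply exp_0).
  generalize (exp_pos d). nra.
Qed.

Lemma one_minus_exp_neg a : 0 <= a <= 1 -> a / 2 <= 1 - exp (- a).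
Proof.
  intros. rewrite exp_Ropp. generalize (exp_ineq1_le a) (exp_pos a). intros.
  assert (/ exp a <= / (1 + a)) by (apply Rinv_le_contravar; lra).
  assert (/ (1 + a) <= 1 - a / 2).
  { apply Rmult_le_reg_r with (1 + a); [lra|]. rewrite Rinv_l by lra. nra. }
  lra.
Qed.

Lemma exp_perturb g z d : Rabs z <= d -> Rabs (exp (g + z) - exp g) <= exp g * (exp d - 1).
Proof.
  intros Hz. rewrite exp_plus.
  replace (exp g * exp z - exp g) with (exp g * (exp z - 1)) by ring.
  rewrite Rabs_mult, (Rabs_pos_eq (exp g)) by (apply Rlt_le, exp_pos).
  apply Rmult_le_compat_l; [apply Rlt_le, exp_pos|].
  apply abs_le_inv in Hz.
  generalize (exp_ineq1_le z) (exp_ineq1_le (- z)); intros E1 E2.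
  assert (exp z * exp (- z) = 1)
    by (rewrite <- exp_plus; replace (z + - z) with 0 by ring; apply exp_0).
  generalize (exp_pos z) (exp_pos (-z)); intros P1 P2.
  assert (exp z <= exp d) by (apply exp_le; lra).
  assert (exp (- z) <= exp d) by (apply exp_le; lra).
  apply Rabs_le. split; nra.
Qed.

Lemma floor_nat r : 0 <= r -> exists k : nat, r - 1 < INR k <= r.
Proof.
  intros Hr. destruct (archimed r) as [H1 H2].
  assert (Hz : (1 <= up r)%Z).
  { assert (0 < up r)%Z by (apply lt_IZR; lra). lia. }
  exists (Z.to_nat (up r - 1)). rewrite INR_IZR_INZ, Z2Nat.id by lia.
  rewrite minus_IZR. simpl. lra.
Qed.

Definition log_gauss (m s : R) (k : nat) : R := - (grid m s k ^ 2) / 2.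

Lemma log_gauss_step m s i : 0 < s ->
  log_gauss m s (S i) - log_gauss m s i = - (INR i + 1 - m) / (s * s) + / (2 * (s * s)).
Proof. intros. unfold log_gauss, grid. rewrite S_INR. field. lra. Qed.

Lemma sum_split_window (f : nat -> R) (L U N : nat) : (L <= U)%nat ->
  sum_f_R0 f N = sum_f_R0 (fun k => if Nat.ltb k L then f k else 0) N
     + sum_f_R0 (fun k => if in_window L U k then f k else 0) N
     + sum_f_R0 (fun k => if Nat.leb U k then f k else 0) N.
Proof.
  intros H. rewrite <- !plus_sum. apply sum_eq. intros k _. unfold in_window.
  destruct (Nat.ltb_spec k L); destruct (Nat.leb_spec L k); destruct (Nat.ltb_spec k U);
    destruct (Nat.leb_spec U k); simpl; try lia; ring.
Qed.

Section Window.
Variables p q : nat.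
Hypothesis Hp : 1 <= INR p.
Hypothesis Hpq : INR p <= INR q.

Let m := m_pq p q.
Let s := s_pq p q.

Variable T : R.
Hypothesis HT : 2 <= T.
Hypothesis Hs_large : 1000 * (T + 3) ^ 3 <= s.

Variables L U : nat.
Hypothesis HL : m - T * s - 1 < INR L <= m - T * s.
Hypothesis HU : m + T * s < INR U <= m + T * s + 1.

Lemma s_facts : 0 < s /\ s * s = s2_pq p q /\ 4 * (s * s) <= INR q /\ 1000 * (T + 3) <= s.
Proof.
  generalize (s_pos p q Hp Hpq) (s_sq p q Hp Hpq) (s2_bounds p q Hp Hpq); intros H0 H1 H2.
  fold s in H0, H1. assert ((T + 3) <= (T + 3) ^ 3) by (simpl; nra).
  repeat split; [lra|lra|lra|nra].
Qed.

Lemma window_indices :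
  (1 <= L)%nat /\ (U < q)%nat /\ (L <= U)%nat /\ INR (U - L) <= 2 * (T + 1) * s.
Proof.
  destruct s_facts as (Hs0 & Hss & HQ & HsT).
  generalize (m_lower p q Hp Hpq) (q_minus_m_lower p q Hp Hpq); fold m; intros Hm HA.
  assert (HLU : (L <= U)%nat) by (apply INR_le; nra).
  repeat split; auto.
  - destruct L; [simpl in HL; nra|lia].
  - apply INR_lt. nra.
  - rewrite minus_INR by auto. nra.
Qed.

Lemma grid_L_bounds : - T - 1 / s < grid m s L <= - T.
Proof.
  destruct s_facts as (Hs0 & _). unfold grid. split.
  - apply Rmult_lt_reg_r with s; [lra|]. unfold Rdiv.
    rewrite Rmult_assoc, Rinv_l by lra.
    replace ((- T - 1 * / s) * s) with (- T * s - 1) by (field; lra). lra.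
  - apply Rmult_le_reg_r with s; [lra|]. unfold Rdiv. rewrite Rmult_assoc, Rinv_l by lra. lra.
Qed.

Lemma grid_U_bounds : T < grid m s U <= T + 1 / s.
Proof.
  destruct s_facts as (Hs0 & _). unfold grid. split.
  - apply Rmult_lt_reg_r with s; [lra|]. unfold Rdiv. rewrite Rmult_assoc, Rinv_l by lra. lra.
  - apply Rmult_le_reg_r with s; [lra|]. unfold Rdiv. rewrite Rmult_assoc, Rinv_l by lra.
    replace ((T + 1 * / s) * s) with (T * s + 1) by (field; lra). lra.
Qed.

Definition step_error : R := 4 * (T + 3) ^ 2 / (s * s).

(* Specialization of [ln_ratio_estimate] to the window, with |k + 1 - m| <= T s + 2. *)
Lemma ln_ratio_window i : (i < q)%nat -> (L <= S i)%nat -> (i <= U)%nat ->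
  Rabs (ln (ratio p q i) + (INR i + 1 - m) / s2_pq p q) <= step_error.
Proof.
  intros Hi1 Hi2 Hi3. destruct s_facts as (Hs0 & Hss & HQ & HsT).
  apply le_INR in Hi2. apply le_INR in Hi3. rewrite S_INR in Hi2.
  assert (HD : Rabs (INR i + 1 - m) <= T * s + 2) by (apply Rabs_le; lra).
  eapply Rle_trans; [apply (ln_ratio_estimate p q Hp Hpq i (T * s + 2)); auto; nra|].
  assert (HY : 1000 <= s * s) by nra.
  unfold step_error. set (Q := INR q) in *. set (Y := s * s) in *.
  assert (HT2 : 25 <= (T + 3) ^ 2) by (simpl; nra).
  assert (E1 : 4 / Q <= 1 / Y) by (apply div_le; lra).
  assert (HD2 : (1 + (T * s + 2)) * (1 + (T * s + 2)) <= (T + 3) ^ 2 * Y).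
  { replace ((T + 3) ^ 2 * Y) with (((T + 3) * s) * ((T + 3) * s)) by (unfold Y; ring).
    apply Rmult_le_compat; nra. }
  assert (E2 : 56 * ((1 + (T * s + 2)) * (1 + (T * s + 2))) / (Q * Q)
               <= 7 / 2 * (T + 3) ^ 2 / Y).
  { apply div_le; [nra|lra|].
    assert (HQQ : 16 * (Y * Y) <= Q * Q) by nra.
    apply Rle_trans with (56 * ((T + 3) ^ 2 * Y) * Y); [nra|].
    replace (56 * ((T + 3) ^ 2 * Y) * Y) with (7 / 2 * (T + 3) ^ 2 * (16 * (Y * Y))) by field.
    apply Rmult_le_compat_l; lra. }
  assert (E3 : 1 / Y + 7 / 2 * (T + 3) ^ 2 / Y <= 4 * (T + 3) ^ 2 / Y).
  { replace (1 / Y + 7 / 2 * (T + 3) ^ 2 / Y) with ((1 + 7 / 2 * (T + 3) ^ 2) / Y)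
      by (field; lra).
    apply div_le; [lra|lra|]. nra. }
  lra.
Qed.

Definition window_error : R := INR (U - L) * (step_error + / (2 * s2_pq p q)).

Lemma window_error_bounds :
  0 <= window_error /\ window_error <= 10 * (T + 3) ^ 3 / s /\ window_error <= 1 / 100.
Proof.
  destruct s_facts as (Hs0 & Hss & HQ & HsT).
  destruct window_indices as (_ & _ & _ & HUL).
  assert (HT2 : 25 <= (T + 3) ^ 2) by (simpl; nra).
  assert (Hsum : step_error + / (2 * s2_pq p q) = (4 * (T + 3) ^ 2 + 1 / 2) / (s * s)).
  { unfold step_error. rewrite <- Hss. field. lra. }
  assert (H0 : 0 <= (4 * (T + 3) ^ 2 + 1 / 2) / (s * s))
    by (apply Rle_mult_inv_pos; nra).
  assert (Hb : window_error <= 10 * (T + 3) ^ 3 / s).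
  { unfold window_error. rewrite Hsum.
    apply Rle_trans with (2 * (T + 1) * s * ((4 * (T + 3) ^ 2 + 1 / 2) / (s * s))).
    { apply Rmult_le_compat_r; auto. }
    replace (2 * (T + 1) * s * ((4 * (T + 3) ^ 2 + 1 / 2) / (s * s)))
      with (2 * (T + 1) * (4 * (T + 3) ^ 2 + 1 / 2) / s) by (field; lra).
    apply div_le; [lra|lra|]. apply Rmult_le_compat_r; [lra|].
    replace (10 * (T + 3) ^ 3) with (2 * (T + 3) * (5 * (T + 3) ^ 2)) by (simpl; ring).
    apply Rmult_le_compat; lra. }
  repeat split.
  - unfold window_error. rewrite Hsum. apply Rmult_le_pos; [apply pos_INR|auto].
  - exact Hb.
  - eapply Rle_trans; [apply Hb|]. apply div_le_k; lra.
Qed.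

Lemma log_weight_window j : (L + j <= U)%nat ->
  Rabs (ln (bweight p q (L + j)) - ln (bweight p q L)
        - (log_gauss m s (L + j) - log_gauss m s L)) <= window_error.
Proof.
  intros Hj. destruct s_facts as (Hs0 & Hss & _).
  destruct window_indices as (_ & HUq & _).
  assert (Hc : 0 < / (2 * s2_pq p q)) by (apply Rinv_0_lt_compat; rewrite <- Hss; nra).
  apply Rle_trans with (INR j * (step_error + / (2 * s2_pq p q))).
  2:{ assert (0 <= step_error) by (unfold step_error; apply Rle_mult_inv_pos; nra).
      apply Rmult_le_compat_r; [lra|].
      apply le_INR. lia. }
  induction j as [|j IH].
  - rewrite Nat.add_0_r. replace (_ - _ - _) with 0 by ring. rewrite Rabs_R0. simpl. lra.
  - specialize (IH ltac:(lia)).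
    replace (L + S j)%nat with (S (L + j)) by lia.
    rewrite bweight_step, ln_mult by (try apply bweight_pos; try apply ratio_pos; lia).
    assert (E := log_gauss_step m s (L + j) Hs0). rewrite Hss in E.
    assert (Hst := ln_ratio_window (L + j) ltac:(lia) ltac:(lia) ltac:(lia)).
    replace (ln (bweight p q (L + j)) + ln (ratio p q (L + j)) - ln (bweight p q L)
             - (log_gauss m s (S (L + j)) - log_gauss m s L))
      with ((ln (bweight p q (L + j)) - ln (bweight p q L)
             - (log_gauss m s (L + j) - log_gauss m s L))
            + (ln (ratio p q (L + j)) + (INR (L + j) + 1 - m) / s2_pq p q
               - / (2 * s2_pq p q))) by (unfold Rdiv in *; lra).
    rewrite S_INR.
    apply abs_le_inv in Hst. apply abs_le_inv in IH. apply Rabs_le. nra.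
Qed.

(* The common scale: w_k ~ e^K gauss(t_k) on the window. *)
Definition log_scale : R := ln (bweight p q L) - log_gauss m s L.

Lemma weight_vs_gauss k : (L <= k <= U)%nat ->
  Rabs (bweight p q k * exp (- log_scale) - gauss (grid m s k))
  <= gauss (grid m s k) * (exp window_error - 1).
Proof.
  intros Hk. assert (HW := log_weight_window (k - L) ltac:(lia)).
  replace (L + (k - L))%nat with k in HW by lia.
  change (gauss (grid m s k)) with (exp (log_gauss m s k)).
  replace (bweight p q k * exp (- log_scale)) with
    (exp (log_gauss m s k + (ln (bweight p q k) - ln (bweight p q L)
                             - (log_gauss m s k - log_gauss m s L)))).
  - apply exp_perturb; auto.
  - rewrite <- (exp_ln (bweight p q k)) at 2 by apply bweight_pos.
    rewrite <- exp_plus. f_equal. unfold log_scale. ring.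
Qed.

Lemma weight_L_bound : bweight p q L <= exp log_scale * gauss T.
Proof.
  destruct s_facts as (Hs0 & _). generalize grid_L_bounds; intros HtL.
  replace (bweight p q L) with (exp log_scale * gauss (grid m s L)).
  - apply Rmult_le_compat_l; [apply Rlt_le, exp_pos|].
    rewrite gauss_abs. apply gauss_antitone. rewrite Rabs_left1; lra.
  - unfold gauss. fold (log_gauss m s L). rewrite <- exp_plus. unfold log_scale.
    rewrite <- (exp_ln (bweight p q L)) at 2 by apply bweight_pos. f_equal. ring.
Qed.

Lemma weight_U_bound : bweight p q U <= 2 * exp log_scale * gauss T.
Proof.
  destruct window_indices as (_ & _ & HLU & _). destruct window_error_bounds as (H0 & _ & H1).
  destruct grid_U_bounds as [HtU _].
  assert (H := weight_vs_gauss U ltac:(lia)). apply abs_le_inv in H.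
  assert (exp window_error <= 2) by (generalize (exp_small window_error ltac:(lra)); lra).
  assert (gauss (grid m s U) <= gauss T) by (apply gauss_antitone; lra).
  assert (0 < gauss (grid m s U)) by apply gauss_pos.
  assert (bweight p q U * exp (- log_scale) <= 2 * gauss T) by nra.
  rewrite exp_Ropp in *. generalize (exp_pos log_scale). intros.
  apply Rmult_le_reg_r with (/ exp log_scale); [apply Rinv_0_lt_compat; auto|].
  replace (2 * exp log_scale * gauss T * / exp log_scale) with (2 * gauss T) by (field; lra).
  auto.
Qed.

Definition lower_mass : R := sum_f_R0 (fun k => if Nat.ltb k L then bweight p q k else 0) q.
Definition upper_mass : R := sum_f_R0 (fun k => if Nat.leb U k then bweight p q k else 0) q.

(* At the window edges the ratio is beyond e^(+-a) with a = T/(2s), so the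
   geometric tails have total mass O(w_edge / a) = O(s e^K gauss T). *)
Lemma upper_mass_bound : upper_mass <= 4 * s * exp log_scale * gauss T.
Proof.
  destruct s_facts as (Hs0 & Hss & HQ & HsT).
  destruct window_indices as (HL1 & HUq & HLU & _).
  set (a := T / (2 * s)).
  assert (Ha : 0 < a <= 1) by (unfold a; split; [apply Rdiv_lt_0_compat|apply div_le_k]; lra).
  assert (He0a : step_error <= a).
  { unfold step_error, a. apply div_le; [nra|lra|].
    assert ((T + 3) ^ 2 <= (T + 3) ^ 3) by (simpl; nra).
    assert (8 * (T + 3) ^ 2 <= T * s) by nra. nra. }
  assert (H1 := ln_ratio_window U HUq ltac:(lia) ltac:(lia)). apply abs_le_inv in H1.
  rewrite <- Hss in H1.
  assert (H2 : a * 2 <= (INR U + 1 - m) / (s * s)).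
  { replace (a * 2) with (T / s) by (unfold a; field; lra). apply div_le; nra. }
  assert (H3 : ratio p q U <= exp (- a)).
  { rewrite <- (exp_ln (ratio p q U)) by (apply ratio_pos; auto). apply exp_le. lra. }
  assert (H4 := one_minus_exp_neg a ltac:(lra)).
  assert (H5 := upper_tail p q U HUq ltac:(generalize (one_minus_exp_neg a); lra)).
  fold upper_mass in H5.
  assert (0 <= upper_mass).
  { apply cond_pos_sum. intros k. destruct (Nat.leb U k); [apply Rlt_le, bweight_pos|lra]. }
  assert (H6 : upper_mass * (a / 2) <= 2 * exp log_scale * gauss T).
  { eapply Rle_trans; [|apply weight_U_bound]. eapply Rle_trans; [|apply H5].
    apply Rmult_le_compat_l; lra. }
  apply Rmult_le_reg_r with (a / 2); [lra|].
  replace (4 * s * exp log_scale * gauss T * (a / 2)) with (exp log_scale * gauss T * T)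
    by (unfold a; field; lra).
  assert (0 < exp log_scale * gauss T) by (apply Rmult_lt_0_compat; [apply exp_pos|apply gauss_pos]).
  nra.
Qed.

Lemma lower_mass_bound : lower_mass <= 2 * s * exp log_scale * gauss T.
Proof.
  destruct s_facts as (Hs0 & Hss & HQ & HsT).
  destruct window_indices as (HL1 & HUq & HLU & _).
  set (a := T / (2 * s)).
  assert (Ha : 0 < a <= 1) by (unfold a; split; [apply Rdiv_lt_0_compat|apply div_le_k]; lra).
  assert (He0a : step_error <= a).
  { unfold step_error, a. apply div_le; [nra|lra|].
    assert ((T + 3) ^ 2 <= (T + 3) ^ 3) by (simpl; nra).
    assert (8 * (T + 3) ^ 2 <= T * s) by nra. nra. }
  assert (H1 := ln_ratio_window (L - 1) ltac:(lia) ltac:(lia) ltac:(lia)).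
  apply abs_le_inv in H1. rewrite <- Hss, minus_INR in H1 by lia. simpl INR in H1.
  assert (H2 : a * 2 <= - (INR L - 1 + 1 - m) / (s * s)).
  { replace (a * 2) with (T / s) by (unfold a; field; lra). apply div_le; nra. }
  assert (H3 : exp a <= ratio p q (L - 1)).
  { rewrite <- (exp_ln (ratio p q (L - 1))) by (apply ratio_pos; lia). apply exp_le.
    unfold Rdiv in *. lra. }
  assert (H3' : 1 < ratio p q (L - 1)) by (generalize (exp_ineq1 a); lra).
  assert (H3'' : / ratio p q (L - 1) <= exp (- a)).
  { rewrite exp_Ropp. apply Rinv_le_contravar; [apply exp_pos|auto]. }
  assert (H4 := one_minus_exp_neg a ltac:(lra)).
  assert (H5 := lower_tail p q L HL1 ltac:(lia) H3'). fold lower_mass in H5.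
  assert (0 <= lower_mass).
  { apply cond_pos_sum. intros k. destruct (Nat.ltb k L); [apply Rlt_le, bweight_pos|lra]. }
  assert (H6 : lower_mass * (a / 2) <= exp log_scale * gauss T).
  { eapply Rle_trans; [|apply weight_L_bound]. eapply Rle_trans; [|apply H5].
    apply Rmult_le_compat_l; lra. }
  apply Rmult_le_reg_r with (a / 2); [lra|].
  replace (2 * s * exp log_scale * gauss T * (a / 2)) with (exp log_scale * gauss T * (T / 2))
    by (unfold a; field; lra).
  assert (0 < exp log_scale * gauss T) by (apply Rmult_lt_0_compat; [apply exp_pos|apply gauss_pos]).
  nra.
Qed.

Lemma window_sum_vs_riemann b :
  Rabs (sum_f_R0 (fun k => if in_window L U k
                           then (if Rle_dec (grid m s k) b then bweight p q k else 0) else 0) q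
        / (s * exp log_scale) - sum_f_R0 (riemann_term m s b L U) q)
  <= (exp window_error - 1) * sum_f_R0 (riemann_term m s b L U) q.
Proof.
  destruct s_facts as (Hs0 & _).
  destruct window_error_bounds as (Hdl0 & _).
  assert (Hexp0 : 0 <= exp window_error - 1) by (generalize (exp_ineq1_le window_error); lra).
  unfold Rdiv. rewrite Rmult_comm, scal_sum, <- minus_sum.
  eapply Rle_trans; [apply Rsum_abs|]. rewrite scal_sum. apply sum_Rle. intros k Hk.
  unfold riemann_term. destruct (in_window L U k) eqn:Ew.
  - unfold in_window in Ew. apply andb_prop in Ew. destruct Ew as [Ew1 Ew2].
    apply Nat.leb_le in Ew1. apply Nat.ltb_lt in Ew2.
    destruct (Rle_dec (grid m s k) b).
    + assert (HwK := weight_vs_gauss k ltac:(lia)).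
      replace (bweight p q k * / (s * exp log_scale) - gauss (grid m s k) / s) with
        ((bweight p q k * exp (- log_scale) - gauss (grid m s k)) / s).
      2:{ rewrite exp_Ropp. field. generalize (exp_pos log_scale); intros; split; lra. }
      unfold Rdiv. rewrite Rabs_mult, (Rabs_pos_eq (/ s)) by (apply Rlt_le, Rinv_0_lt_compat; lra).
      replace (gauss (grid m s k) * / s * (exp window_error - 1))
        with (gauss (grid m s k) * (exp window_error - 1) * / s) by ring.
      apply Rmult_le_compat_r; [apply Rlt_le, Rinv_0_lt_compat; lra|auto].
    + rewrite !Rmult_0_l, Rminus_0_r, Rabs_R0. lra.
  - rewrite !Rmult_0_l, Rminus_0_r, Rabs_R0. lra.
Qed.

Lemma window_sum_vs_integral b : grid m s L <= b <= grid m s U ->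
  Rabs (sum_f_R0 (fun k => if in_window L U k
                           then (if Rle_dec (grid m s k) b then bweight p q k else 0) else 0) q
        / (s * exp log_scale) - RInt gauss (grid m s L) b)
  <= 10 * (exp window_error - 1) + (2 * T + 3) / s.
Proof.
  intros Hb. destruct s_facts as (Hs0 & Hss & HQ & HsT).
  destruct window_indices as (HL1 & HUq & HLU & HUL).
  destruct window_error_bounds as (Hdl0 & _).
  assert (Hexp0 : 0 <= exp window_error - 1) by (generalize (exp_ineq1_le window_error); lra).
  assert (HrR : INR (U - L) / (s * s) + 1 / s <= (2 * T + 3) / s).
  { replace ((2 * T + 3) / s) with (2 * (T + 1) * s / (s * s) + 1 / s) by (field; lra).
    apply Rplus_le_compat_r, Rmult_le_compat_r; [apply Rlt_le, Rinv_0_lt_compat; nra|auto]. }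
  assert (HR := riemann_window m s b L U q Hs0 HLU ltac:(lia) Hb).
  assert (HVR := window_sum_vs_riemann b).
  set (R := sum_f_R0 (riemann_term m s b L U) q) in *.
  assert (HRb : R <= 10).
  { apply abs_le_inv in HR. generalize (RInt_gauss_le9 (grid m s L) b ltac:(lra)).
    assert ((2 * T + 3) / s <= 1) by (apply div_le_k; nra). lra. }
  assert (HR0 : 0 <= R).
  { unfold R. apply cond_pos_sum. intros k. unfold riemann_term.
    destruct (in_window L U k); [destruct (Rle_dec _ _)|]; try lra.
    apply Rlt_le, Rdiv_lt_0_compat; [apply gauss_pos|lra]. }
  apply abs_le_inv in HR. apply abs_le_inv in HVR. apply Rabs_le. nra.
Qed.

Lemma partial_sum_vs_integral (f : nat -> R) b :
  (forall k, 0 <= f k <= bweight p q k) ->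
  (forall k, (L <= k < U)%nat -> f k = if Rle_dec (grid m s k) b then bweight p q k else 0) ->
  grid m s L <= b <= grid m s U ->
  Rabs (sum_f_R0 f q / (s * exp log_scale) - RInt gauss (grid m s L) b)
  <= 6 * gauss T + 10 * (exp window_error - 1) + (2 * T + 3) / s.
Proof.
  intros Hf Hwin Hb. destruct s_facts as (Hs0 & _).
  destruct window_indices as (HL1 & HUq & HLU & HUL).
  assert (HE : 0 < s * exp log_scale) by (apply Rmult_lt_0_compat; [lra|apply exp_pos]).
  rewrite (sum_split_window f L U q HLU).
  set (X1 := sum_f_R0 (fun k => if Nat.ltb k L then f k else 0) q).
  set (X3 := sum_f_R0 (fun k => if Nat.leb U k then f k else 0) q).
  assert (H1 : 0 <= X1 <= lower_mass).
  { unfold X1, lower_mass. split.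
    - apply cond_pos_sum. intros k. destruct (Nat.ltb k L); [apply Hf|lra].
    - apply sum_Rle. intros k _. destruct (Nat.ltb k L); [apply Hf|lra]. }
  assert (H3 : 0 <= X3 <= upper_mass).
  { unfold X3, upper_mass. split.
    - apply cond_pos_sum. intros k. destruct (Nat.leb U k); [apply Hf|lra].
    - apply sum_Rle. intros k _. destruct (Nat.leb U k); [apply Hf|lra]. }
  rewrite (sum_eq (fun k => if in_window L U k then f k else 0)
     (fun k => if in_window L U k
               then (if Rle_dec (grid m s k) b then bweight p q k else 0) else 0)).
  2:{ intros k _. destruct (in_window L U k) eqn:Ew; [|auto].
      unfold in_window in Ew. apply andb_prop in Ew. destruct Ew as [Ew1 Ew2].
      apply Nat.leb_le in Ew1. apply Nat.ltb_lt in Ew2. apply Hwin. lia. }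
  assert (H2 := window_sum_vs_integral b Hb).
  assert (H4 : (X1 + X3) / (s * exp log_scale) <= 6 * gauss T).
  { apply div_le_k; [auto|]. generalize lower_mass_bound upper_mass_bound. lra. }
  assert (H5 : 0 <= (X1 + X3) / (s * exp log_scale)) by (apply Rle_mult_inv_pos; lra).
  set (X2 := sum_f_R0 (fun k => if in_window L U k
                     then (if Rle_dec (grid m s k) b then bweight p q k else 0) else 0) q) in *.
  replace ((X1 + X2 + X3) / (s * exp log_scale) - RInt gauss (grid m s L) b) with
    ((X1 + X3) / (s * exp log_scale) + (X2 / (s * exp log_scale) - RInt gauss (grid m s L) b))
    by (unfold Rdiv; ring).
  eapply Rle_trans; [apply Rabs_triang|]. rewrite Rabs_pos_eq by auto. lra.
Qed.

(* The two sums of the distribution function, normalized by s e^K, approximate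
   the Gaussian integrals over [-T, x] and [-T, T]: moving the endpoints from
   t_L and t_U to -T and T costs at most 1/s each. *)
Lemma normalized_sums_near_integrals x : Rabs x + 1 <= T ->
  let eta := 6 * gauss T + 20 * window_error + (2 * T + 5) / s in
  Rabs (sum_f_R0 (fun k => if Rle_dec (grid m s k) x then bweight p q k else 0) q
        / (s * exp log_scale) - RInt gauss (- T) x) <= eta /\
  Rabs (sum_f_R0 (bweight p q) q / (s * exp log_scale) - RInt gauss (- T) T) <= eta.
Proof.
  intros Hx eta. destruct s_facts as (Hs0 & _). destruct window_indices as (_ & _ & HLU & _).
  destruct window_error_bounds as (Hdl0 & _ & Hdl1).
  generalize grid_L_bounds grid_U_bounds; intros HtL HtU.
  assert (Hwp := bweight_pos p q).
  assert (HX := partial_sum_vs_integral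
                  (fun k => if Rle_dec (grid m s k) x then bweight p q k else 0) x
                  ltac:(intros k; cbv beta; destruct (Rle_dec _ _); generalize (Hwp k); lra)
                  ltac:(intros; reflexivity)
                  ltac:(generalize (Rle_abs x) (Rle_abs (- x)); rewrite Rabs_Ropp; lra)).
  assert (HW := partial_sum_vs_integral (bweight p q) (grid m s U)
                  ltac:(intros k; generalize (Hwp k); lra)
                  ltac:(intros k Hk; destruct (Rle_dec _ _) as [|Hn]; [reflexivity|];
                        exfalso; apply Hn, grid_le; [lra|lia]) ltac:(lra)).
  assert (Hexp : exp window_error - 1 <= 2 * window_error) by (apply exp_small; lra).
  generalize (RInt_gauss_bounds (grid m s L) (- T) ltac:(lra))
             (RInt_gauss_bounds T (grid m s U) ltac:(lra)); intros HI1 HI2.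
  assert (Hs5 : (2 * T + 5) / s = (2 * T + 3) / s + 2 / s) by (field; lra).
  split.
  - rewrite <- (RInt_gauss_chasles (grid m s L) (- T) x) in HX.
    apply abs_le_inv in HX. apply Rabs_le. unfold eta. lra.
  - rewrite <- (RInt_gauss_chasles (grid m s L) (- T) (grid m s U)),
      <- (RInt_gauss_chasles (- T) T (grid m s U)) in HW.
    apply abs_le_inv in HW. apply Rabs_le. unfold eta. lra.
Qed.

End Window.

Lemma quotient_perturb a b A B eta : Rabs (a - A) <= eta -> Rabs (b - B) <= eta ->
  1 <= B -> 0 <= A <= B -> 0 <= eta <= 1/2 -> Rabs (a / b - A / B) <= 4 * eta.
Proof.
  intros Ha Hb HB HA He. apply abs_le_inv in Ha. apply abs_le_inv in Hb.
  replace (a / b - A / B) with (((a - A) * B - A * (b - B)) / (b * B)) by (field; lra).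
  unfold Rdiv. rewrite Rabs_mult, Rabs_inv, (Rabs_pos_eq (b * B)) by nra.
  apply Rmult_le_reg_r with (b * B); [nra|].
  rewrite Rmult_assoc, Rinv_l, Rmult_1_r by nra.
  assert (Rabs ((a - A) * B - A * (b - B)) <= eta * B + A * eta).
  { unfold Rminus at 1. eapply Rle_trans; [apply Rabs_triang|].
    rewrite Rabs_Ropp, !Rabs_mult, (Rabs_pos_eq B), (Rabs_pos_eq A) by lra.
    apply Rplus_le_compat.
    - apply Rmult_le_compat_r; [lra|]. apply Rabs_le; lra.
    - apply Rmult_le_compat_l; [lra|]. apply Rabs_le; lra. }
  assert (eta * B + A * eta <= 2 * eta * B) by nra.
  assert (0 <= 2 * eta * B * (2 * b - 1)) by (apply Rmult_le_pos; nra).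
  nra.
Qed.

(* If X and W approximate int_(-T)^x gauss and int_(-T)^T gauss, then X/W
   approximates Phi(x) = 1/2 + (2 pi)^(-1/2) int_0^x gauss; the truncation at
   +-T costs O(|x| gauss T) by [RInt_gauss_tail]. *)
Lemma ratio_to_Phi x T X W eta : 2 <= T -> Rabs x + 1 <= T -> gauss T <= 1 / 100 ->
  0 <= eta <= 1 / 2 ->
  Rabs (X - RInt gauss (- T) x) <= eta -> Rabs (W - RInt gauss (- T) T) <= eta ->
  Rabs (X / W - (/ 2 + / sqrt (2 * PI) * RInt gauss 0 x)) <= 4 * eta + 3 * Rabs x * gauss T.
Proof.
  intros HT Hx Hg Heta HX HW.
  set (J := RInt gauss 0 T). set (y := RInt gauss 0 x). set (h := sqrt (2 * PI) / 2).
  assert (Hh : 1 <= h <= 3 / 2) by (unfold h; generalize sqrt_2PI_bounds; lra).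
  assert (HJ : Rabs (J - h) <= 3 * gauss T) by (apply RInt_gauss_tail; lra).
  apply abs_le_inv in HJ.
  assert (HB : RInt gauss (- T) T = 2 * J).
  { rewrite <- (RInt_gauss_chasles (- T) 0 T), RInt_gauss_sym.
    change (@eq R (J + J) (2 * J)). ring. }
  assert (HA : RInt gauss (- T) x = J + y).
  { rewrite <- (RInt_gauss_chasles (- T) 0 x), RInt_gauss_sym. reflexivity. }
  assert (Hxl : - T <= x <= T).
  { generalize (Rle_abs x) (Rle_abs (- x)). rewrite Rabs_Ropp. lra. }
  assert (HA0 : 0 <= RInt gauss (- T) x) by (apply RInt_gauss_bounds; lra).
  assert (HAB : RInt gauss (- T) x <= RInt gauss (- T) T).
  { rewrite <- (RInt_gauss_chasles (- T) x T). generalize (RInt_gauss_bounds x T ltac:(lra)). lra. }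
  assert (HQ := quotient_perturb X W _ _ eta HX HW ltac:(lra) ltac:(lra) Heta).
  rewrite HA, HB in HQ.
  assert (Hphi : Rabs ((J + y) / (2 * J) - (/ 2 + / sqrt (2 * PI) * y)) <= 3 * Rabs x * gauss T).
  { replace (/ sqrt (2 * PI)) with (/ (2 * h)) by (unfold h; field; generalize sqrt_2PI_bounds; lra).
    replace ((J + y) / (2 * J) - (/ 2 + / (2 * h) * y)) with (y * (h - J) / (2 * J * h))
      by (field; lra).
    unfold Rdiv. rewrite !Rabs_mult.
    assert (Hinv : 0 <= / (2 * J * h) <= 1).
    { split; [apply Rlt_le, Rinv_0_lt_compat; nra|].
      rewrite <- Rinv_1. apply Rinv_le_contravar; [lra|nra]. }
    rewrite (Rabs_pos_eq (/ (2 * J * h))) by lra.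
    assert (Hy : Rabs y <= Rabs x) by apply RInt_gauss_0_abs.
    assert (Hhj : Rabs (h - J) <= 3 * gauss T) by (apply Rabs_le; lra).
    apply Rle_trans with (Rabs x * (3 * gauss T) * 1); [|lra].
    apply Rmult_le_compat; [apply Rmult_le_pos; apply Rabs_pos|lra| |lra].
    apply Rmult_le_compat; try apply Rabs_pos; auto. }
  replace (X / W - (/ 2 + / sqrt (2 * PI) * y)) with
    ((X / W - (J + y) / (2 * J)) + ((J + y) / (2 * J) - (/ 2 + / sqrt (2 * PI) * y))) by ring.
  eapply Rle_trans; [apply Rabs_triang|]. lra.
Qed.

Lemma cube_dominates_linear T : 2 <= T -> 2 * T + 5 <= (T + 3) ^ 3.
Proof.
  intros. assert (25 <= (T + 3) * (T + 3)) by nra.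
  replace ((T + 3) ^ 3) with ((T + 3) * ((T + 3) * (T + 3))) by ring. nra.
Qed.

(* The window indices L = floor(m - T s) and U = floor(m + T s + 1) exist,
   since T s <= s^2 <= q/4 <= m. *)
Lemma window_exists p q T : 1 <= INR p -> INR p <= INR q -> 2 <= T ->
  1000 * (T + 3) ^ 3 <= s_pq p q -> exists L U : nat,
  m_pq p q - T * s_pq p q - 1 < INR L <= m_pq p q - T * s_pq p q /\
  m_pq p q + T * s_pq p q < INR U <= m_pq p q + T * s_pq p q + 1.
Proof.
  intros Hp Hpq HT Hs.
  generalize (s_pos p q Hp Hpq) (m_lower p q Hp Hpq) (s_sq p q Hp Hpq) (s2_bounds p q Hp Hpq).
  intros Hs0 Hm Hss Hs2.
  assert (HTs : T * s_pq p q <= s_pq p q * s_pq p q).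
  { apply Rmult_le_compat_r; [lra|]. assert (T + 3 <= (T + 3) ^ 3) by (simpl; nra). lra. }
  destruct (floor_nat (m_pq p q - T * s_pq p q)) as [L HL]; [nra|].
  destruct (floor_nat (m_pq p q + T * s_pq p q + 1)) as [U HU]; [nra|].
  exists L, U. split; [exact HL|lra].
Qed.

Lemma cdf_error_bound p q x T : 1 <= INR p -> INR p <= INR q -> 2 <= T -> Rabs x + 1 <= T ->
  gauss T <= 1 / 100 -> 1000 * (T + 3) ^ 3 <= s_pq p q ->
  Rabs (norm_cdf p q x - (/ 2 + / sqrt (2 * PI) * RInt gauss 0 x))
  <= (30 + 3 * Rabs x) * gauss T + 900 * (T + 3) ^ 3 / s_pq p q.
Proof.
  intros Hp Hpq HT Hx Hg Hs.
  destruct (window_exists p q T Hp Hpq HT Hs) as (L & U & HL & HU).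
  assert (Hs0 := s_pos p q Hp Hpq).
  destruct (window_error_bounds p q Hp Hpq T HT Hs L U HL HU) as (Hdl0 & Hdl & _).
  destruct (normalized_sums_near_integrals p q Hp Hpq T HT Hs L U HL HU x Hx) as [HX HW].
  set (m := m_pq p q) in *. set (s := s_pq p q) in *.
  set (E := s * exp (log_scale p q L)) in *.
  set (X := sum_f_R0 (fun k => if Rle_dec (grid m s k) x then bweight p q k else 0) q) in *.
  set (W := sum_f_R0 (bweight p q) q) in *.
  set (eta := 6 * gauss T + 20 * window_error p q T L U + (2 * T + 5) / s) in *.
  assert (Hcdf : norm_cdf p q x = X / W).
  { unfold norm_cdf, X, W. fold (bnorm p q). unfold Rdiv. rewrite Rmult_comm, scal_sum.
    apply sum_eq. intros k _. unfold bprob, grid. fold m s.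
    destruct (Rle_dec _ _); unfold Rdiv; ring. }
  assert (HZ : (2 * T + 5) / s <= (T + 3) ^ 3 / s).
  { apply Rmult_le_compat_r; [apply Rlt_le, Rinv_0_lt_compat; lra|].
    apply cube_dominates_linear; lra. }
  assert (HZ1 : (T + 3) ^ 3 / s <= 1 / 1000) by (apply div_le; lra).
  assert (HZ0 : 0 <= (2 * T + 5) / s) by (apply Rle_mult_inv_pos; lra).
  assert (Heta : 0 <= eta <= 1 / 2) by (unfold eta; generalize (gauss_pos T); lra).
  assert (HR := ratio_to_Phi x T (X / E) (W / E) eta HT Hx Hg Heta HX HW).
  assert (HW0 : 0 < W) by (apply tech1; intros; apply bweight_pos).
  assert (HE0 : 0 < E) by (apply Rmult_lt_0_compat; [lra|apply exp_pos]).
  replace (X / E / (W / E)) with (X / W) in HR by (field; lra).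
  rewrite Hcdf. eapply Rle_trans; [apply HR|]. unfold eta.
  generalize (gauss_pos T) (Rabs_pos x). lra.
Qed.

Lemma choose_cutoff x eps : 0 < eps -> exists T, 2 <= T /\ Rabs x + 1 <= T /\
  gauss T <= 1 / 100 /\ (30 + 3 * Rabs x) * gauss T < eps / 2.
Proof.
  intros Heps. set (cx := 30 + 3 * Rabs x).
  assert (Hcx : 30 <= cx) by (unfold cx; generalize (Rabs_pos x); lra).
  assert (Hce : 0 < 2 * cx / eps) by (apply Rdiv_lt_0_compat; lra).
  exists (Rabs x + 102 + 2 * cx / eps).
  set (T := Rabs x + 102 + 2 * cx / eps).
  assert (HT : 102 <= T) by (unfold T; generalize (Rabs_pos x); lra).
  assert (Hg : gauss T <= / T) by (apply gauss_le_inv; lra).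
  assert (HTinv : / T <= 1 / 100) by (rewrite Rdiv_1_l; apply Rinv_le_contravar; lra).
  split; [lra|split; [unfold T; generalize (Rabs_pos (2 * cx / eps)); lra|split; [lra|]]].
  apply Rle_lt_trans with (cx * / T); [apply Rmult_le_compat_l; lra|].
  apply Rmult_lt_reg_r with T; [lra|]. rewrite Rmult_assoc, Rinv_l, Rmult_1_r by lra.
  assert (cx = eps / 2 * (2 * cx / eps)) by (field; lra).
  assert (2 * cx / eps < T) by (unfold T; generalize (Rabs_pos x); lra).
  nra.
Qed.

(* s_(n, cn) grows like sqrt n: s^2 >= q/12 >= n/12. *)
Lemma s_pq_unbounded c S : 1 <= c -> exists N : nat, forall n q : nat,
  (N <= n)%nat -> (0 < n)%nat -> INR q = c * INR n -> S < s_pq n q.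
Proof.
  intros hc. destruct (INR_archimed 1 (12 * (S * S)) ltac:(lra)) as [N HN].
  rewrite Rmult_1_r in HN. exists N. intros n q HnN Hn0 Hq.
  assert (Hn1 : 1 <= INR n) by (apply (le_INR 1); lia).
  assert (Hnq : INR n <= INR q) by (rewrite Hq; nra).
  apply le_INR in HnN.
  generalize (s_sq n q Hn1 Hnq) (s2_bounds n q Hn1 Hnq) (s_pos n q Hn1 Hnq). intros.
  destruct (Rle_or_lt (s_pq n q) (Rabs S)) as [Hle|Hlt].
  - assert (s_pq n q * s_pq n q <= Rabs S * Rabs S) by (apply Rmult_le_compat; lra).
    rewrite <- Rabs_mult, Rabs_pos_eq in H2 by nra. nra.
  - generalize (Rle_abs S). lra.
Qed.

Theorem mainTheorem11 (c : R) (hc : 1 <= c) :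
  forall (x : R) (pr : Riemann_integrable gauss 0 x),
  forall eps : R, 0 < eps ->
  exists N : nat, forall n q : nat,
    (N <= n)%nat -> (0 < n)%nat -> INR q = c * INR n ->
    Rabs (norm_cdf n q x - (/ 2 + / sqrt (2 * PI) * RiemannInt pr)) < eps.
Proof.
  intros x pr eps Heps.
  rewrite <- (RInt_Reals gauss 0 x pr).
  destruct (choose_cutoff x eps Heps) as (T & HT & Hx & Hg & Htail).
  set (Z := (T + 3) ^ 3).
  assert (HZ : 0 < Z) by (apply pow_lt; lra).
  assert (HZe : 0 < 1800 * Z / eps) by (apply Rdiv_lt_0_compat; lra).
  destruct (s_pq_unbounded c (1000 * Z + 1800 * Z / eps) hc) as [N HN].
  exists N. intros n q HnN Hn0 Hq.
  assert (Hn1 : 1 <= INR n) by (apply (le_INR 1); lia).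
  assert (Hnq : INR n <= INR q) by (rewrite Hq; nra).
  specialize (HN n q HnN Hn0 Hq).
  assert (Hbound := cdf_error_bound n q x T Hn1 Hnq HT Hx Hg ltac:(fold Z; lra)).
  assert (H2 : 900 * Z / s_pq n q <= eps / 2).
  { apply div_le_k; [lra|].
    replace (eps / 2 * s_pq n q) with (900 * Z + eps / 2 * (s_pq n q - 1800 * Z / eps))
      by (field; lra).
    assert (0 <= eps / 2 * (s_pq n q - 1800 * Z / eps)) by (apply Rmult_le_pos; lra).
    lra. }
  fold Z in Hbound. lra.
Qed.
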